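(* Let $A\in\mathbb{R}^{n\times n}$ be Metzler, $J\in\mathbb{R}^{n\times n}$ be nonnegative and $\bar T>0$. The following statements are equivalent: (a) The impulsive system is asymptotically stable under constant dwell-time $\bar T$ (i.e. when $T_k=\bar T$ for all $k$). (b) There exist $\lambda\in\mathbb{R}^n_{>0}$ and $\mu\in\mathbb{R}^n_{>0}$ such that, with $V(x)=\lambda^\top x$, one has $V(Je^{A\bar T}x)-V(x)\le-\mu^\top x$ for all $x\in\mathbb{R}^n_{\ge0}$ (i.e. $V(x(t_{k+1}^+))-V(x(t_k^+))\le -\mu^\top x(t_k^+)$ along all trajectories). (c) There exists $\lambda\in\mathbb{R}^n_{>0}$ such that $\lambda^\top(Je^{A\bar T}-I_n)<0$; equivalently, $Je^{A\bar T}$ is Schur stable. (d) There exists $\lambda\in\mathbb{R}^n_{>0}$ such that $(Je^{A\bar T}-I_n)\lambda<0$; equivalently, $e^{A^\top\bar T}J^\top$ is Schur stable. (e) There exist a differentiable function $\zeta:[0,\bar T]\to\mathbb{R}^n$ with $\zeta(\bar T)\in\mathbb{R}^n_{>0}$ and a scalar $\varepsilon>0$ such that $\zeta(\tau)^\top A-\dot\zeta(\tau)^\top\le 0$ for all $\tau\in[0,\bar T]$ and $\zeta(\bar T)^\top J-\zeta(0)^\top+\varepsilon\mathbf{1}_n^\top\le0$. (f) There exist a differentiable function $\xi:[0,\bar T]\to\mathbb{R}^n$ with $\xi(0)\in\mathbb{R}^n_{>0}$ and a scalar $\varepsilon>0$ such that $\xi(\tau)^\top A+\dot\xi(\tau)^\top\le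 0$ for all $\tau\in[0,\bar T]$ and $\xi(0)^\top J-\xi(\bar T)^\top+\varepsilon\mathbf{1}_n^\top\le0$.
   Context: Consider the linear impulsive system $\dot x(t)=Ax(t)$ for $t\neq t_k$, $x(t_k^+)=Jx(t_k)$, $x(t_0)=x_0$, where $x(t)\in\mathbb{R}^n$, $x(t^+):=\lim_{s\downarrow t}x(s)$, and the impulse times $\{t_k\}_{k\in\mathbb{N}}$ are strictly increasing with $t_k\to\infty$; $T_k:=t_{k+1}-t_k$. A matrix is Metzler if its off-diagonal entries are nonnegative, nonnegative if all entries are nonnegative, and Schur stable if its spectral radius is $<1$. Vector inequalities are componentwise; $\mathbf{1}_n$ is the $n$-vector of ones. The system is asymptotically stable under a given dwell-time constraint if its zero solution is globally asymptotically stable for every impulse sequence whose dwell-times satisfy the constraint. *)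

(* classical reals. Vectors of R^n are functions nat -> R and
   n x n matrices are functions nat -> nat -> R; only indices < n matter. *)
From Stdlib Require Import Reals Factorial ClassicalEpsilon.
Open Scope R_scope.

Definition vec := nat -> R.
Definition mat := nat -> nat -> R.

Fixpoint rsum (n : nat) (f : nat -> R) : R :=
  match n with O => 0 | S k => rsum k f + f k end.

Definition idm : mat := fun i j => if Nat.eq_dec i j then 1 else 0.
Definition mtr (M : mat) : mat := fun i j => M j i.
Definition mscale (c : R) (M : mat) : mat := fun i j => c * M i j.
Definition msub (M N : mat) : mat := fun i j => M i j - N i j.
Definition mmul (n : nat) (M N : mat) : mat :=
  fun i j => rsum n (fun k => M i k * N k j).
Definition mvec (n : nat) (M : mat) (x : vec) : vec :=
  fun i => rsum n (fun j => M i j * x j).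
Definition vmat (n : nat) (l : vec) (M : mat) : vec :=
  fun j => rsum n (fun i => l i * M i j).
Definition dot (n : nat) (l x : vec) : R := rsum n (fun i => l i * x i).
Definition vnorm (n : nat) (x : vec) : R := rsum n (fun i => Rabs (x i)).

Fixpoint mpow (n : nat) (M : mat) (k : nat) : mat :=
  match k with O => idm | S k' => mmul n M (mpow n M k') end.

(* Matrix exponential e^M = sum_k M^k / k!, entrywise (the series always
   converges; the value is selected by Hilbert's epsilon). *)
Definition mexp (n : nat) (M : mat) : mat := fun i j =>
  epsilon (inhabits 0)
    (fun l => infinite_sum (fun k => mpow n M k i j / INR (Factorial.fact k)) l).

Definition Metzler (n : nat) (A : mat) : Prop :=
  forall i j, (i < n)%nat -> (j < n)%nat -> i <> j -> 0 <= A i j.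
Definition nonneg_mat (n : nat) (J : mat) : Prop :=
  forall i j, (i < n)%nat -> (j < n)%nat -> 0 <= J i j.
Definition pos_vec (n : nat) (x : vec) : Prop :=
  forall i, (i < n)%nat -> 0 < x i.
Definition nonneg_vec (n : nat) (x : vec) : Prop :=
  forall i, (i < n)%nat -> 0 <= x i.
Definition neg_vec (n : nat) (x : vec) : Prop :=
  forall i, (i < n)%nat -> x i < 0.

(* Schur stability: spectral radius < 1, i.e. every (complex) eigenvalue
   alpha + i beta of M, with eigenvector a + i b <> 0, has modulus < 1.
   The complex eigen-equation M(a+ib) = (alpha+i beta)(a+ib) is written
   out in real and imaginary parts. *)
Definition Schur_stable (n : nat) (M : mat) : Prop :=
  forall (a b : vec) (alpha beta : R),
    (exists i, (i < n)%nat /\ (a i <> 0 \/ b i <> 0)) ->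
    (forall i, (i < n)%nat -> mvec n M a i = alpha * a i - beta * b i) ->
    (forall i, (i < n)%nat -> mvec n M b i = beta * a i + alpha * b i) ->
    alpha * alpha + beta * beta < 1.

(* Solution of the impulsive system xdot = A x (t <> t_k),
   x(t_k^+) = J x(t_k), x(t_0) = x0, on [t_0, +oo), where the initial time
   is t_0 = tk 0.  Between impulses the solution is differentiable and
   satisfies the ODE, it is left-continuous at each t_{k+1}, and its right
   limit at t_k equals J x(t_k). *)
Definition is_solution (n : nat) (A J : mat) (tk : nat -> R) (x0 : vec)
    (x : R -> vec) : Prop :=
  (forall i, (i < n)%nat -> x (tk 0%nat) i = x0 i) /\
  (forall k s, tk k < s < tk (S k) -> forall i, (i < n)%nat ->
     derivable_pt_lim (fun r => x r i) s (mvec n A (x s) i)) /\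
  (forall k i, (i < n)%nat ->
     limit1_in (fun r => x r i) (fun r => tk k < r < tk (S k))
               (x (tk (S k)) i) (tk (S k))) /\
  (forall k i, (i < n)%nat ->
     limit1_in (fun r => x r i) (fun r => tk k < r < tk (S k))
               (mvec n J (x (tk k)) i) (tk k)).

Definition GAS (n : nat) (A J : mat) (tk : nat -> R) : Prop :=
  (forall eps, 0 < eps -> exists delta, 0 < delta /\
     forall x0 x, is_solution n A J tk x0 x -> vnorm n x0 < delta ->
       forall t, tk 0%nat <= t -> vnorm n (x t) < eps) /\
  (forall x0 x, is_solution n A J tk x0 x ->
     forall eps, 0 < eps -> exists T, forall t, T <= t -> vnorm n (x t) < eps).

(* Asymptotic stability under constant dwell-time Tbar: GAS for every impulse
   sequence with t_{k+1} - t_k = Tbar for all k (strict increase and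
   t_k -> oo follow from Tbar > 0). *)
Definition AS_constant_dwell (n : nat) (A J : mat) (Tbar : R) : Prop :=
  forall tk : nat -> R, (forall k, tk (S k) - tk k = Tbar) -> GAS n A J tk.

(* f : [a,b] -> R has derivative f' on [a,b] (one-sided at the endpoints). *)
Definition deriv_on (a b : R) (f f' : R -> R) : Prop :=
  forall tau, a <= tau <= b ->
    limit1_in (fun s => (f s - f tau) / (s - tau))
              (fun s => a <= s <= b /\ s <> tau) (f' tau) tau.

(* Between impulses the state is propagated by [e^(tA)], which is nonnegative
   because [A] is Metzler, so [x(t_k) = (e^(T A) J)^k x_0] and asymptotic
   stability amounts to the powers of the nonnegative matrix [e^(T A) J], or
   equivalently of [M = J e^(T A)], tending to zero.  For a nonnegative matrix
   this holds iff some positive vector is strictly decreased by [M] on the left,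
   iff some positive vector is strictly decreased on the right (a Neumann sum
   [sum_(r<K) M^r 1] is one), iff [M] is Schur stable.  A contraction vector
   forces every eigenvalue to have modulus [< 1].  Conversely the
   Collatz-Wielandt value [r] of [M], the infimum of the [s] with [M x <= s x]
   for some [x > 0], makes [r I - M] singular; under Schur stability this gives
   [r < 1], and a vector with [M x <= s x], [s < 1], is a contraction vector.
   The clock-dependent conditions (e) and (f) amount to a left contraction
   vector [v] of [e^(T A) J]: take [zeta(tau) = v^T e^(tau A)] and
   [xi(tau) = v^T e^((T - tau) A)]. *)

From Stdlib Require Import Reals Lra Lia Factorial ClassicalEpsilon ZArith.
From Coquelicot Require Import Coquelicot.
From mathcomp Require all_boot all_algebra Rstruct.
Open Scope R_scope.

(** * Finite sums and matrices *)

Lemma rsum_ext n f g : (forall i, (i < n)%nat -> f i = g i) -> rsum n f = rsum n g.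
Proof.
  induction n; simpl; intros H; auto.
  rewrite IHn by (intros; apply H; lia). rewrite (H n) by lia. auto.
Qed.

Lemma rsum_add n f g : rsum n (fun i => f i + g i) = rsum n f + rsum n g.
Proof. induction n; simpl; [ring|]. rewrite IHn; ring. Qed.

Lemma rsum_sub n f g : rsum n (fun i => f i - g i) = rsum n f - rsum n g.
Proof. induction n; simpl; [ring|]. rewrite IHn; ring. Qed.

Lemma rsum_opp n f : rsum n (fun i => - f i) = - rsum n f.
Proof. induction n; simpl; [ring|]. rewrite IHn; ring. Qed.

Lemma rsum_scal_l n c f : rsum n (fun i => c * f i) = c * rsum n f.
Proof. induction n; simpl; [ring|]. rewrite IHn; ring. Qed.

Lemma rsum_scal_r n c f : rsum n (fun i => f i * c) = rsum n f * c.
Proof. induction n; simpl; [ring|]. rewrite IHn; ring. Qed.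

Lemma rsum_const n c : rsum n (fun _ => c) = INR n * c.
Proof. induction n; simpl rsum; [simpl; ring|]. rewrite IHn, S_INR; ring. Qed.

Lemma rsum_eq0 n f : (forall i, (i < n)%nat -> f i = 0) -> rsum n f = 0.
Proof.
  intros H. rewrite (rsum_ext n f (fun _ => 0)), rsum_const by auto. ring.
Qed.

Lemma rsum_le n f g : (forall i, (i < n)%nat -> f i <= g i) -> rsum n f <= rsum n g.
Proof.
  induction n; simpl; intros H; [lra|].
  assert (f n <= g n) by (apply H; lia).
  assert (rsum n f <= rsum n g) by (apply IHn; intros; apply H; lia).
  lra.
Qed.

Lemma rsum_nonneg n f : (forall i, (i < n)%nat -> 0 <= f i) -> 0 <= rsum n f.
Proof.
  intros H. replace 0 with (rsum n (fun _ => 0)) by (apply rsum_eq0; auto).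
  apply rsum_le; auto.
Qed.

Lemma rsum_lt n f g : (forall i, (i < n)%nat -> f i <= g i) ->
  (exists i, (i < n)%nat /\ f i < g i) -> rsum n f < rsum n g.
Proof.
  induction n; simpl; intros H [i [Hi Hlt]]; [lia|].
  assert (f n <= g n) by (apply H; lia).
  destruct (Nat.eq_dec i n) as [->|ne].
  - assert (rsum n f <= rsum n g) by (apply rsum_le; intros; apply H; lia). lra.
  - assert (rsum n f < rsum n g) by (apply IHn; [intros; apply H; lia | exists i; split; [lia|auto]]).
    lra.
Qed.

Lemma rsum_abs n f : Rabs (rsum n f) <= rsum n (fun i => Rabs (f i)).
Proof.
  induction n; simpl; [rewrite Rabs_R0; lra|].
  eapply Rle_trans; [apply Rabs_triang | lra].
Qed.

Lemma rsum_swap n m f :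
  rsum n (fun i => rsum m (fun j => f i j)) = rsum m (fun j => rsum n (fun i => f i j)).
Proof.
  induction n; simpl; [rewrite rsum_const; ring|].
  rewrite IHn, <- rsum_add; auto.
Qed.

Lemma rsum_term_le n f k : (forall i, (i < n)%nat -> 0 <= f i) -> (k < n)%nat ->
  f k <= rsum n f.
Proof.
  induction n; simpl; intros H Hk; [lia|].
  assert (0 <= rsum n f) by (apply rsum_nonneg; intros; apply H; lia).
  assert (0 <= f n) by (apply H; lia).
  destruct (Nat.eq_dec k n) as [->|ne]; [lra|].
  assert (f k <= rsum n f) by (apply IHn; [intros; apply H|]; lia).
  lra.
Qed.

Lemma rsum_delta_r n f k : (k < n)%nat -> rsum n (fun j => f j * idm j k) = f k.
Proof.
  induction n; simpl; intros Hk; [lia|]. unfold idm at 2.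
  destruct (Nat.eq_dec n k) as [->|ne].
  - rewrite rsum_eq0; [ring|]. intros i Hi. unfold idm.
    destruct (Nat.eq_dec i k); [lia|ring].
  - rewrite IHn by lia. ring.
Qed.

Lemma rsum_delta_l n f k : (k < n)%nat -> rsum n (fun j => idm k j * f j) = f k.
Proof.
  intros Hk. rewrite <- (rsum_delta_r n f k Hk). apply rsum_ext. intros i _.
  unfold idm. destruct (Nat.eq_dec k i), (Nat.eq_dec i k); subst; try ring; lia.
Qed.

Lemma rsum_shift n f : rsum (S n) f = f 0%nat + rsum n (fun i => f (S i)).
Proof.
  induction n; [simpl; ring|].
  change (rsum (S (S n)) f) with (rsum (S n) f + f (S n)). rewrite IHn. simpl. ring.
Qed.

Lemma fin_pos_lower_bound n g : (forall j, (j < n)%nat -> 0 < g j) ->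
  exists e, 0 < e /\ forall j, (j < n)%nat -> e <= g j.
Proof.
  induction n; intros H; [exists 1; split; [lra | intros; lia]|].
  destruct IHn as [e [He H2]]; [intros; apply H; lia|].
  exists (Rmin e (g n)). split; [apply Rmin_pos; [auto | apply H; lia]|].
  intros j Hj. destruct (Nat.eq_dec j n) as [->|ne]; [apply Rmin_r|].
  eapply Rle_trans; [apply Rmin_l | apply H2; lia].
Qed.

Lemma fin_upper_bound_lt n g b : (forall j, (j < n)%nat -> g j < b) ->
  exists s, s < b /\ forall j, (j < n)%nat -> g j <= s.
Proof.
  intros H. destruct (fin_pos_lower_bound n (fun j => b - g j)) as [e [He H2]].
  - intros j Hj. specialize (H j Hj). lra.
  - exists (b - e). split; [lra|]. intros j Hj. specialize (H2 j Hj). lra.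
Qed.

Lemma fin_eventually n (P : nat -> nat -> Prop) :
  (forall j, (j < n)%nat -> exists K, forall k, (K <= k)%nat -> P j k) ->
  exists K, forall j k, (j < n)%nat -> (K <= k)%nat -> P j k.
Proof.
  induction n; intros H; [exists 0%nat; intros; lia|].
  destruct IHn as [K1 H1]; [intros; apply H; lia|].
  destruct (H n) as [K2 H2]; [lia|].
  exists (max K1 K2). intros j k Hj Hk.
  destruct (Nat.eq_dec j n) as [->|ne]; [apply H2 | apply H1]; lia.
Qed.

Definition meq n (M N : mat) : Prop :=
  forall i j, (i < n)%nat -> (j < n)%nat -> M i j = N i j.

Lemma mmul_ext n M M' N N' i j : (forall k, (k < n)%nat -> M i k = M' i k) ->
  (forall k, (k < n)%nat -> N k j = N' k j) -> mmul n M N i j = mmul n M' N' i j.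
Proof. intros H1 H2. unfold mmul. apply rsum_ext; intros. rewrite H1, H2; auto. Qed.

Lemma mvec_ext n M N x y i : (forall j, (j < n)%nat -> M i j = N i j) ->
  (forall j, (j < n)%nat -> x j = y j) -> mvec n M x i = mvec n N y i.
Proof. intros H1 H2; unfold mvec; apply rsum_ext; intros; rewrite H1, H2; auto. Qed.

Lemma vmat_ext n M N x y j : (forall i, (i < n)%nat -> M i j = N i j) ->
  (forall i, (i < n)%nat -> x i = y i) -> vmat n x M j = vmat n y N j.
Proof. intros H1 H2; unfold vmat; apply rsum_ext; intros; rewrite H1, H2; auto. Qed.

Lemma mmul_assoc n M N P i j :
  mmul n (mmul n M N) P i j = mmul n M (mmul n N P) i j.
Proof.
  unfold mmul.
  transitivity (rsum n (fun l => rsum n (fun k => M i k * N k l * P l j))).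
  - apply rsum_ext; intros. rewrite <- rsum_scal_r. apply rsum_ext; intros; ring.
  - rewrite rsum_swap. apply rsum_ext; intros. rewrite <- rsum_scal_l.
    apply rsum_ext; intros; ring.
Qed.

Lemma mmul_idm_l n M i j : (i < n)%nat -> mmul n idm M i j = M i j.
Proof. intros; apply (rsum_delta_l n (fun l => M l j)); auto. Qed.

Lemma mmul_idm_r n M i j : (j < n)%nat -> mmul n M idm i j = M i j.
Proof. intros; apply (rsum_delta_r n (M i)); auto. Qed.

Lemma mvec_idm n x i : (i < n)%nat -> mvec n idm x i = x i.
Proof. intros; apply rsum_delta_l; auto. Qed.

Lemma vmat_idm n x j : (j < n)%nat -> vmat n x idm j = x j.
Proof. intros; apply rsum_delta_r; auto. Qed.

Lemma mvec_mmul n M N x i : mvec n (mmul n M N) x i = mvec n M (mvec n N x) i.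
Proof.
  unfold mvec, mmul.
  transitivity (rsum n (fun j => rsum n (fun k => M i k * N k j * x j))).
  - apply rsum_ext; intros. rewrite <- rsum_scal_r. apply rsum_ext; intros; ring.
  - rewrite rsum_swap. apply rsum_ext; intros. rewrite <- rsum_scal_l.
    apply rsum_ext; intros; ring.
Qed.

Lemma vmat_mmul n l M N j : vmat n l (mmul n M N) j = vmat n (vmat n l M) N j.
Proof.
  unfold vmat, mmul.
  transitivity (rsum n (fun i => rsum n (fun k => l i * M i k * N k j))).
  - apply rsum_ext; intros. rewrite <- rsum_scal_l. apply rsum_ext; intros; ring.
  - rewrite rsum_swap. apply rsum_ext; intros. rewrite <- rsum_scal_r.
    apply rsum_ext; intros; ring.
Qed.

Lemma mvec_tr n M x i : mvec n (mtr M) x i = vmat n x M i.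
Proof. unfold mvec, vmat, mtr. apply rsum_ext; intros; ring. Qed.

Lemma mvec_scal n M c x i : mvec n M (fun j => c * x j) i = c * mvec n M x i.
Proof. unfold mvec. rewrite <- rsum_scal_l. apply rsum_ext; intros; ring. Qed.

Lemma mvec_sub n M x y i :
  mvec n M (fun j => x j - y j) i = mvec n M x i - mvec n M y i.
Proof. unfold mvec. rewrite <- rsum_sub. apply rsum_ext; intros; ring. Qed.

Lemma mvec_rsum n M K (f : nat -> vec) i :
  mvec n M (fun j => rsum K (fun r => f r j)) i = rsum K (fun r => mvec n M (f r) i).
Proof.
  unfold mvec. rewrite <- rsum_swap. apply rsum_ext; intros.
  rewrite <- rsum_scal_l; auto.
Qed.

Lemma mpow_S_r n M k i j : (i < n)%nat -> (j < n)%nat ->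
  mpow n M (S k) i j = mmul n (mpow n M k) M i j.
Proof.
  revert i j; induction k; intros i j Hi Hj.
  - simpl. rewrite mmul_idm_r, mmul_idm_l; auto.
  - change (mpow n M (S (S k)) i j) with (mmul n M (mpow n M (S k)) i j).
    rewrite (mmul_ext n M M (mpow n M (S k)) (mmul n (mpow n M k) M)) by auto.
    rewrite <- mmul_assoc. apply mmul_ext; auto.
Qed.

Lemma mpow_tr n M k i j : (i < n)%nat -> (j < n)%nat ->
  mpow n (mtr M) k i j = mpow n M k j i.
Proof.
  revert i j; induction k; intros i j Hi Hj.
  - simpl. unfold idm. destruct (Nat.eq_dec i j), (Nat.eq_dec j i); subst; auto; lia.
  - rewrite mpow_S_r by auto. simpl. unfold mmul. apply rsum_ext; intros.
    rewrite IHk by auto. unfold mtr. ring.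
Qed.

Definition mnorm (n : nat) (M : mat) : R :=
  rsum n (fun i => rsum n (fun j => Rabs (M i j))).

Lemma mnorm_nonneg n M : 0 <= mnorm n M.
Proof. apply rsum_nonneg; intros; apply rsum_nonneg; intros; apply Rabs_pos. Qed.

Lemma mnorm_row n M i : (i < n)%nat -> rsum n (fun j => Rabs (M i j)) <= mnorm n M.
Proof.
  intros. apply (rsum_term_le n (fun i => rsum n (fun j => Rabs (M i j)))); auto.
  intros; apply rsum_nonneg; intros; apply Rabs_pos.
Qed.

Lemma mnorm_col n M j : (j < n)%nat -> rsum n (fun i => Rabs (M i j)) <= mnorm n M.
Proof.
  intros. unfold mnorm. rewrite rsum_swap.
  apply (rsum_term_le n (fun j => rsum n (fun i => Rabs (M i j)))); auto.
  intros; apply rsum_nonneg; intros; apply Rabs_pos.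
Qed.

Lemma mnorm_entry n M i j : (i < n)%nat -> (j < n)%nat -> Rabs (M i j) <= mnorm n M.
Proof.
  intros. eapply Rle_trans; [|apply (mnorm_row n M i); auto].
  apply (rsum_term_le n (fun j => Rabs (M i j))); auto. intros; apply Rabs_pos.
Qed.

Lemma mnorm_le_const n M c : 0 <= c ->
  (forall i j, (i < n)%nat -> (j < n)%nat -> Rabs (M i j) <= c) ->
  mnorm n M <= INR n * INR n * c.
Proof.
  intros Hc H. apply Rle_trans with (rsum n (fun i => rsum n (fun j => c))).
  - apply rsum_le; intros; apply rsum_le; intros; auto.
  - rewrite rsum_const, rsum_const. lra.
Qed.

Lemma mpow_entry_bound n M k i j : (i < n)%nat -> (j < n)%nat ->
  Rabs (mpow n M k i j) <= mnorm n M ^ k.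
Proof.
  revert i j; induction k; intros i j Hi Hj.
  - simpl. unfold idm. destruct (Nat.eq_dec i j); rewrite ?Rabs_R1, ?Rabs_R0; lra.
  - simpl. unfold mmul. eapply Rle_trans; [apply rsum_abs|].
    apply Rle_trans with (rsum n (fun l => Rabs (M i l) * mnorm n M ^ k)).
    + apply rsum_le. intros l Hl. rewrite Rabs_mult.
      apply Rmult_le_compat_l; [apply Rabs_pos | auto].
    + rewrite rsum_scal_r. apply Rmult_le_compat_r.
      * apply pow_le, mnorm_nonneg.
      * apply mnorm_row; auto.
Qed.

Lemma vnorm_nonneg n v : 0 <= vnorm n v.
Proof. apply rsum_nonneg; intros; apply Rabs_pos. Qed.

Lemma vnorm_ext n u v : (forall i, (i < n)%nat -> u i = v i) -> vnorm n u = vnorm n v.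
Proof. intros H. unfold vnorm. apply rsum_ext; intros; rewrite H; auto. Qed.

Lemma vnorm_mvec n M v : vnorm n (mvec n M v) <= mnorm n M * vnorm n v.
Proof.
  unfold vnorm, mvec.
  apply Rle_trans with (rsum n (fun i => rsum n (fun j => Rabs (M i j) * Rabs (v j)))).
  - apply rsum_le; intros. eapply Rle_trans; [apply rsum_abs|].
    apply rsum_le; intros. rewrite Rabs_mult; lra.
  - rewrite rsum_swap, <- rsum_scal_l. apply rsum_le; intros j Hj.
    rewrite rsum_scal_r. apply Rmult_le_compat_r; [apply Rabs_pos | apply mnorm_col; auto].
Qed.

Lemma Series_nonneg a : (forall k, 0 <= a k) -> ex_series a -> 0 <= Series a.
Proof.
  intros H He. replace 0 with (Series (fun k => 0 * a k)).
  - apply Series_le; auto. intros k; split; [lra|]. specialize (H k); lra.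
  - rewrite Series_scal_l; ring.
Qed.

Lemma ex_series_Rscal c a : ex_series a -> ex_series (fun k => c * a k).
Proof.
  intros H. apply (ex_series_ext (fun k => a k * c)); [intros; apply Rmult_comm|].
  apply ex_series_scal_r; auto.
Qed.

Lemma ex_series_rsum n (f : nat -> nat -> R) : (forall l, (l < n)%nat -> ex_series (f l)) ->
  ex_series (fun k => rsum n (fun l => f l k)).
Proof.
  induction n; intros H; simpl.
  - apply (ex_series_ext (fun k => 0 * 0 ^ k)); [intros; apply Rmult_0_l|].
    apply ex_series_Rscal, ex_series_geom. rewrite Rabs_R0; lra.
  - apply (ex_series_ext (fun k => plus (rsum n (fun l => f l k)) (f n k))); [reflexivity|].
    apply (ex_series_plus (fun k => rsum n (fun l => f l k)) (f n));
      [apply IHn; intros; apply H; lia | apply H; lia].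
Qed.

Lemma Series_rsum n (f : nat -> nat -> R) : (forall l, (l < n)%nat -> ex_series (f l)) ->
  Series (fun k => rsum n (fun l => f l k)) = rsum n (fun l => Series (f l)).
Proof.
  induction n; intros H; simpl.
  - transitivity (Series (fun k => 0 * (fun _ : nat => 0) k)).
    + apply Series_ext; intros; simpl; ring.
    + rewrite (Series_scal_l 0 (fun _ => 0)). ring.
  - rewrite Series_plus, IHn; auto; intros; try apply H; try lia.
    apply ex_series_rsum; intros; apply H; lia.
Qed.

(** * Nonnegative matrices with vanishing powers *)

Definition right_contractive (n : nat) (N : mat) : Prop :=
  exists x, pos_vec n x /\ forall i, (i < n)%nat -> mvec n N x i < x i.

Definition left_contractive (n : nat) (N : mat) : Prop :=
  exists l, pos_vec n l /\ forall j, (j < n)%nat -> vmat n l N j < l j.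

Definition subinvariant (n : nat) (N : mat) (s : R) : Prop :=
  exists x, pos_vec n x /\ forall i, (i < n)%nat -> mvec n N x i <= s * x i.

Definition pow_cvg0 (n : nat) (N : mat) : Prop :=
  forall eps, 0 < eps -> exists K, forall k i j, (K <= k)%nat ->
    (i < n)%nat -> (j < n)%nat -> Rabs (mpow n N k i j) < eps.

Lemma mmul_nonneg n M N : nonneg_mat n M -> nonneg_mat n N -> nonneg_mat n (mmul n M N).
Proof.
  intros HM HN i j Hi Hj. apply rsum_nonneg. intros. apply Rmult_le_pos; auto.
Qed.

Lemma mpow_nonneg n N k : nonneg_mat n N -> nonneg_mat n (mpow n N k).
Proof.
  intros HN. induction k; intros i j Hi Hj; simpl.
  - unfold idm; destruct (Nat.eq_dec i j); lra.
  - apply mmul_nonneg; auto.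
Qed.

Lemma nonneg_mat_tr n N : nonneg_mat n N -> nonneg_mat n (mtr N).
Proof. intros H i j Hi Hj; apply H; auto. Qed.

Lemma mvec_le_compat n N x y i : nonneg_mat n N -> (i < n)%nat ->
  (forall j, (j < n)%nat -> x j <= y j) -> mvec n N x i <= mvec n N y i.
Proof. intros. apply rsum_le; intros. apply Rmult_le_compat_l; auto. Qed.

Lemma pos_vec_le_sum n x i : pos_vec n x -> (i < n)%nat -> x i <= rsum n x.
Proof. intros H Hi. apply rsum_term_le; auto. intros; apply Rlt_le, H; auto. Qed.

Section Subinvariant.
Variables (n : nat) (N : mat) (x : vec) (s : R).
Hypotheses (HN : nonneg_mat n N) (Hx : pos_vec n x) (Hs : 0 <= s).
Hypothesis Hsub : forall i, (i < n)%nat -> mvec n N x i <= s * x i.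

Lemma subinvariant_mpow k i : (i < n)%nat -> mvec n (mpow n N k) x i <= s ^ k * x i.
Proof.
  revert i; induction k; intros i Hi.
  - simpl. rewrite mvec_idm by auto. lra.
  - simpl (mpow n N (S k)). rewrite mvec_mmul.
    eapply Rle_trans; [apply (mvec_le_compat n N _ (fun j => s ^ k * x j)); auto|].
    rewrite mvec_scal. specialize (Hsub i Hi).
    assert (0 <= s ^ k) by (apply pow_le; lra).
    simpl. replace (s * s ^ k * x i) with (s ^ k * (s * x i)) by ring.
    apply Rmult_le_compat_l; auto.
Qed.

(* Comparing with [x] bounds every entry by [sum x / min x] times [s^k]. *)
Lemma subinvariant_geometric :
  exists c, 0 <= c /\ forall k i j, (i < n)%nat -> (j < n)%nat -> mpow n N k i j <= c * s ^ k.
Proof.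
  destruct (fin_pos_lower_bound n x) as [m [Hm Hmx]]; [intros; apply Hx; auto|].
  set (X := rsum n x).
  assert (HX : 0 <= X) by (apply rsum_nonneg; intros; apply Rlt_le, Hx; auto).
  exists (X / m). split; [apply Rmult_le_pos; [auto | apply Rlt_le, Rinv_0_lt_compat; auto]|].
  intros k i j Hi Hj.
  assert (Hentry : mpow n N k i j * x j <= s ^ k * x i).
  { eapply Rle_trans; [|apply subinvariant_mpow; auto].
    apply (rsum_term_le n (fun j => mpow n N k i j * x j) j); auto.
    intros; apply Rmult_le_pos; [apply mpow_nonneg | apply Rlt_le, Hx]; auto. }
  assert (m <= x j) by auto. assert (x i <= X) by (apply pos_vec_le_sum; auto).
  assert (0 <= s ^ k) by (apply pow_le; lra).
  assert (0 <= mpow n N k i j) by (apply mpow_nonneg; auto).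
  apply (Rmult_le_reg_r m); auto.
  replace (X / m * s ^ k * m) with (s ^ k * X) by (field; lra). nra.
Qed.

End Subinvariant.

Lemma right_contractive_subinvariant n N : right_contractive n N ->
  exists s, 0 <= s < 1 /\ subinvariant n N s.
Proof.
  intros [x [Hx Hlt]].
  destruct (fin_upper_bound_lt n (fun i => mvec n N x i / x i) 1) as [s [Hs1 Hs]].
  { intros i Hi. specialize (Hx i Hi). apply (Rmult_lt_reg_r (x i)); auto.
    unfold Rdiv. rewrite Rmult_assoc, Rinv_l by lra. rewrite Rmult_1_r, Rmult_1_l. auto. }
  exists (Rmax 0 s). split; [split; [apply Rmax_l | apply Rmax_lub_lt; lra]|].
  exists x. split; auto. intros i Hi. specialize (Hs i Hi). specialize (Hx i Hi).
  apply Rle_trans with (s * x i).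
  - apply (Rmult_le_compat_r (x i)) in Hs; [|lra].
    unfold Rdiv in Hs. rewrite Rmult_assoc, Rinv_l, Rmult_1_r in Hs by lra. auto.
  - apply Rmult_le_compat_r; [lra | apply Rmax_r].
Qed.

Lemma right_contractive_geometric n N : nonneg_mat n N -> right_contractive n N ->
  exists s c, 0 <= s < 1 /\ 0 <= c /\
    forall k i j, (i < n)%nat -> (j < n)%nat -> mpow n N k i j <= c * s ^ k.
Proof.
  intros HN HR. destruct (right_contractive_subinvariant n N HR) as [s [Hs [x [Hx Hsub]]]].
  destruct (subinvariant_geometric n N x s HN Hx ltac:(lra) Hsub) as [c [Hc Hg]].
  exists s, c. auto.
Qed.

Lemma right_contractive_pow_cvg0 n N : nonneg_mat n N -> right_contractive n N -> pow_cvg0 n N.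
Proof.
  intros HN HR eps Heps.
  destruct (right_contractive_geometric n N HN HR) as [s [c [Hs [Hc Hg]]]].
  destruct (pow_lt_1_zero s ltac:(rewrite Rabs_pos_eq; lra) (eps / (c + 1)))
    as [K HK]; [apply Rdiv_lt_0_compat; lra|].
  exists K. intros k i j Hk Hi Hj. specialize (HK k Hk).
  rewrite Rabs_pos_eq in HK by (apply pow_le; lra).
  rewrite Rabs_pos_eq by (apply mpow_nonneg; auto).
  apply Rle_lt_trans with (c * s ^ k); [auto|].
  apply Rle_lt_trans with ((c + 1) * s ^ k); [apply Rmult_le_compat_r; [apply pow_le|]; lra|].
  apply (Rmult_lt_compat_l (c + 1)) in HK; [|lra].
  replace ((c + 1) * (eps / (c + 1))) with eps in HK by (field; lra). auto.
Qed.

Definition onev : vec := fun _ => 1.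

(* Once some power has row sums [< 1], the Neumann partial sum [sum_{r<K} N^r 1]
   is strictly decreased by [N]. *)
Lemma pow_cvg0_right_contractive n N : nonneg_mat n N -> pow_cvg0 n N -> right_contractive n N.
Proof.
  intros HN HD.
  assert (Hn : 0 < INR n + 1) by (pose proof (pos_INR n); lra).
  destruct (HD (/ (INR n + 1))) as [K0 HK]; [apply Rinv_0_lt_compat; auto|].
  set (K := S K0). set (f := fun r i => mvec n (mpow n N r) onev i).
  assert (Hf0 : forall i, (i < n)%nat -> f 0%nat i = 1) by (intros; apply mvec_idm; auto).
  assert (Hfpos : forall r i, (i < n)%nat -> 0 <= f r i).
  { intros r i Hi. apply rsum_nonneg; intros. unfold onev. rewrite Rmult_1_r.
    apply mpow_nonneg; auto. }
  exists (fun i => rsum K (fun r => f r i)). split.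
  - intros i Hi. unfold K. rewrite rsum_shift, Hf0 by auto.
    assert (0 <= rsum K0 (fun r => f (S r) i)) by (apply rsum_nonneg; intros; apply Hfpos; auto).
    lra.
  - intros i Hi. rewrite mvec_rsum.
    assert (E : rsum K (fun r => mvec n N (f r) i) = rsum K (fun r => f (S r) i)).
    { apply rsum_ext. intros r _. unfold f. simpl (mpow n N (S r)). rewrite mvec_mmul. auto. }
    assert (FK : f K i < 1).
    { apply Rle_lt_trans with (rsum n (fun _ => / (INR n + 1))).
      - apply rsum_le. intros j Hj. unfold onev. rewrite Rmult_1_r.
        specialize (HK K i j ltac:(unfold K; lia) Hi Hj). apply Rabs_def2 in HK. lra.
      - rewrite rsum_const. apply (Rmult_lt_reg_r (INR n + 1)); auto.
        rewrite Rmult_assoc, Rinv_l by lra. lra. }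
    assert (Hs : rsum K (fun r => f r i) + f K i = f 0%nat i + rsum K (fun r => f (S r) i))
      by apply (rsum_shift K (fun r => f r i)).
    rewrite Hf0 in Hs by auto. rewrite E. lra.
Qed.

Lemma left_contractive_tr n N : left_contractive n N <-> right_contractive n (mtr N).
Proof.
  split; intros [x [Hx H]]; exists x; split; auto; intros i Hi;
    specialize (H i Hi); rewrite mvec_tr in *; auto.
Qed.

Lemma pow_cvg0_tr n N : pow_cvg0 n N -> pow_cvg0 n (mtr N).
Proof.
  intros H eps He. destruct (H eps He) as [K HK]. exists K.
  intros. rewrite mpow_tr; auto.
Qed.

Lemma left_contractive_pow_cvg0 n N : nonneg_mat n N -> left_contractive n N -> pow_cvg0 n N.
Proof.
  intros HN HL eps He. apply left_contractive_tr in HL.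
  destruct (right_contractive_pow_cvg0 n _ (nonneg_mat_tr n N HN) HL eps He) as [K HK].
  exists K. intros k i j Hk Hi Hj. rewrite <- mpow_tr; auto.
Qed.

Lemma pow_cvg0_left_contractive n N : nonneg_mat n N -> pow_cvg0 n N -> left_contractive n N.
Proof.
  intros HN HD. apply left_contractive_tr, pow_cvg0_right_contractive.
  - apply nonneg_mat_tr; auto.
  - apply pow_cvg0_tr; auto.
Qed.

Lemma mpow_mmul_comm n P Q k i j : (i < n)%nat -> (j < n)%nat ->
  mpow n (mmul n Q P) (S k) i j = mmul n Q (mmul n (mpow n (mmul n P Q) k) P) i j.
Proof.
  revert i j. induction k; intros i j Hi Hj.
  - simpl (mpow n (mmul n Q P) 1). rewrite mmul_idm_r by auto. apply mmul_ext; auto.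
    intros l Hl. simpl. rewrite mmul_idm_l; auto.
  - change (mpow n (mmul n Q P) (S (S k)) i j)
      with (mmul n (mmul n Q P) (mpow n (mmul n Q P) (S k)) i j).
    rewrite (mmul_ext n (mmul n Q P) (mmul n Q P) _
               (mmul n Q (mmul n (mpow n (mmul n P Q) k) P))) by auto.
    rewrite mmul_assoc. apply mmul_ext; auto. intros l Hl.
    change (mpow n (mmul n P Q) (S k)) with (mmul n (mmul n P Q) (mpow n (mmul n P Q) k)).
    rewrite (mmul_assoc n (mmul n P Q) (mpow n (mmul n P Q) k) P).
    rewrite <- (mmul_assoc n P Q (mmul n (mpow n (mmul n P Q) k) P)). reflexivity.
Qed.

Lemma pow_cvg0_mmul_comm n P Q : pow_cvg0 n (mmul n P Q) -> pow_cvg0 n (mmul n Q P).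
Proof.
  intros HD eps He.
  set (cP := mnorm n P). set (cQ := mnorm n Q).
  assert (HcP : 0 <= cP) by apply mnorm_nonneg. assert (HcQ : 0 <= cQ) by apply mnorm_nonneg.
  set (d := eps / ((cP + 1) * (cQ + 1))).
  assert (Hd : 0 < d) by (unfold d; apply Rdiv_lt_0_compat; nra).
  destruct (HD d Hd) as [K HK].
  exists (S K). intros k i j Hk Hi Hj.
  destruct k as [|k]; [lia|]. rewrite mpow_mmul_comm by auto.
  assert (Hin : forall l, (l < n)%nat ->
            Rabs (mmul n (mpow n (mmul n P Q) k) P l j) <= d * cP).
  { intros l Hl. eapply Rle_trans; [apply rsum_abs|].
    apply Rle_trans with (rsum n (fun b => d * Rabs (P b j))).
    - apply rsum_le; intros b Hb. rewrite Rabs_mult.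
      apply Rmult_le_compat_r; [apply Rabs_pos | left; apply HK; auto; lia].
    - rewrite rsum_scal_l. apply Rmult_le_compat_l; [lra | apply mnorm_col; auto]. }
  eapply Rle_lt_trans; [apply rsum_abs|].
  apply Rle_lt_trans with (rsum n (fun a => Rabs (Q i a) * (d * cP))).
  - apply rsum_le; intros a Ha. rewrite Rabs_mult.
    apply Rmult_le_compat_l; [apply Rabs_pos | auto].
  - rewrite rsum_scal_r.
    apply Rle_lt_trans with (cQ * (d * cP)); [apply Rmult_le_compat_r; [nra | apply mnorm_row; auto]|].
    unfold d. replace (cQ * (eps / ((cP + 1) * (cQ + 1)) * cP))
      with (eps * (cQ * cP / ((cP + 1) * (cQ + 1)))) by (field; nra).
    assert (cQ * cP / ((cP + 1) * (cQ + 1)) < 1).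
    { apply (Rmult_lt_reg_r ((cP + 1) * (cQ + 1))); [nra|].
      unfold Rdiv. rewrite Rmult_assoc, Rinv_l by nra. nra. }
    nra.
Qed.

(** * Schur stability *)

Definition cmod (x y : R) : R := sqrt (x * x + y * y).

Lemma cmod_nonneg x y : 0 <= cmod x y.
Proof. apply sqrt_pos. Qed.

Lemma cmod_pos x y : (x <> 0 \/ y <> 0) -> 0 < cmod x y.
Proof. intros H. apply sqrt_lt_R0. destruct H; nra. Qed.

Lemma cmod_triang x1 y1 x2 y2 : cmod (x1 + x2) (y1 + y2) <= cmod x1 y1 + cmod x2 y2.
Proof.
  unfold cmod. set (a := x1 * x1 + y1 * y1). set (b := x2 * x2 + y2 * y2).
  assert (Ha : 0 <= a) by (unfold a; nra). assert (Hb : 0 <= b) by (unfold b; nra).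
  pose proof (sqrt_pos a). pose proof (sqrt_pos b).
  rewrite <- (sqrt_square (sqrt a + sqrt b)) by lra.
  apply sqrt_le_1_alt.
  replace ((sqrt a + sqrt b) * (sqrt a + sqrt b)) with (a + b + 2 * sqrt (a * b)).
  2:{ rewrite sqrt_mult by auto.
      replace a with (sqrt a * sqrt a) at 1 by (apply sqrt_sqrt; auto).
      replace b with (sqrt b * sqrt b) at 1 by (apply sqrt_sqrt; auto). ring. }
  assert (x1 * x2 + y1 * y2 <= sqrt (a * b)).
  { destruct (Rle_or_lt (x1 * x2 + y1 * y2) 0); [pose proof (sqrt_pos (a * b)); lra|].
    rewrite <- (sqrt_square (x1 * x2 + y1 * y2)) by lra. apply sqrt_le_1_alt.
    unfold a, b. pose proof (Rle_0_sqr (x1 * y2 - x2 * y1)) as HH; unfold Rsqr in HH. nra. }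
  unfold a, b in *. nra.
Qed.

Lemma cmod_scal c x y : 0 <= c -> cmod (c * x) (c * y) = c * cmod x y.
Proof.
  intros. unfold cmod.
  replace (c * x * (c * x) + c * y * (c * y)) with ((c * c) * (x * x + y * y)) by ring.
  rewrite sqrt_mult by nra. rewrite sqrt_square; auto.
Qed.

Lemma cmod_mul al be x y : cmod (al * x - be * y) (be * x + al * y) = cmod al be * cmod x y.
Proof. unfold cmod. rewrite <- sqrt_mult by nra. f_equal; ring. Qed.

Lemma cmod_rsum n c a b : (forall j, (j < n)%nat -> 0 <= c j) ->
  cmod (rsum n (fun j => c j * a j)) (rsum n (fun j => c j * b j))
  <= rsum n (fun j => c j * cmod (a j) (b j)).
Proof.
  induction n; intros H; simpl.
  - unfold cmod. replace (0 * 0 + 0 * 0) with 0 by ring. rewrite sqrt_0; lra.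
  - eapply Rle_trans; [apply cmod_triang|]. rewrite cmod_scal by (apply H; lia).
    assert (cmod (rsum n (fun j => c j * a j)) (rsum n (fun j => c j * b j))
            <= rsum n (fun j => c j * cmod (a j) (b j))) by (apply IHn; intros; apply H; lia).
    lra.
Qed.

(* With [w = |a + i b|] entrywise, [|alpha + i beta| w <= N w]; pairing with
   the left vector [l] gives [|alpha + i beta| (l.w) <= (l N).w < l.w]. *)
Lemma left_contractive_Schur_stable n N : nonneg_mat n N -> left_contractive n N ->
  Schur_stable n N.
Proof.
  intros HN [l [Hl HL]] a b al be [i0 [Hi0 Hnz]] Ha Hb.
  set (w := fun j => cmod (a j) (b j)). set (rho := cmod al be).
  assert (Hw : forall j, (j < n)%nat -> 0 <= w j) by (intros; apply cmod_nonneg).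
  assert (Hw0 : 0 < w i0) by (apply cmod_pos; auto).
  assert (Hrow : forall i, (i < n)%nat -> rho * w i <= mvec n N w i).
  { intros i Hi. unfold rho, w. rewrite <- cmod_mul, <- Ha, <- Hb by auto.
    apply cmod_rsum. intros; apply HN; auto. }
  set (S := rsum n (fun i => l i * w i)).
  assert (HS : 0 < S).
  { replace 0 with (rsum n (fun _ => 0)) by (apply rsum_eq0; auto). apply rsum_lt.
    - intros; apply Rmult_le_pos; [apply Rlt_le, Hl|]; auto.
    - exists i0. split; auto. apply Rmult_lt_0_compat; auto. }
  assert (Hpair : rsum n (fun i => l i * mvec n N w i) = rsum n (fun j => vmat n l N j * w j)).
  { unfold mvec, vmat.
    transitivity (rsum n (fun i => rsum n (fun j => l i * N i j * w j))).
    - apply rsum_ext; intros. rewrite <- rsum_scal_l. apply rsum_ext; intros; ring.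
    - rewrite rsum_swap. apply rsum_ext; intros. rewrite <- rsum_scal_r; auto. }
  assert (rho * S < S).
  { unfold S. rewrite <- rsum_scal_l. eapply Rle_lt_trans.
    - apply (rsum_le n _ (fun i => l i * mvec n N w i)). intros i Hi.
      replace (rho * (l i * w i)) with (l i * (rho * w i)) by ring.
      apply Rmult_le_compat_l; [apply Rlt_le, Hl | apply Hrow]; auto.
    - rewrite Hpair. apply rsum_lt.
      + intros j Hj. apply Rmult_le_compat_r; [|apply Rlt_le, HL]; auto.
      + exists i0. split; [auto | apply Rmult_lt_compat_r; [|apply HL]; auto]. }
  assert (rho < 1) by (apply (Rmult_lt_reg_r S); lra).
  assert (0 <= rho) by apply cmod_nonneg.
  assert (rho * rho < 1) by nra. unfold rho, cmod in *. rewrite sqrt_sqrt in * by nra. auto.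
Qed.

Lemma Schur_stable_meq n M N : meq n M N -> Schur_stable n M -> Schur_stable n N.
Proof.
  intros H HS a b al be Hnz Ha Hb. apply (HS a b al be Hnz); intros i Hi.
  - rewrite <- (Ha i Hi). apply mvec_ext; auto.
  - rewrite <- (Hb i Hi). apply mvec_ext; auto.
Qed.

Module DetDichotomy.
Import all_boot all_algebra Rstruct GRing.Theory.
Local Open Scope ring_scope.

Lemma rsum_big (n : nat) (f : nat -> R) : rsum n f = \sum_(i < n) f i.
Proof. by elim: n => [|n IH] /=; [rewrite big_ord0 | rewrite big_ord_recr /= IH]. Qed.

Lemma singular_or_right_invertible (n : nat) (P : mat) :
  (exists y : vec, (exists i, (i < n)%coq_nat /\ y i <> R0) /\
     forall i, (i < n)%coq_nat -> mvec n P y i = R0)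
  \/ (exists B : mat, meq n (mmul n P B) idm).
Proof.
case: n P => [|n] P.
  by right; exists (fun _ _ => R0) => i j /ltP.
pose Pm : 'M[R]_n.+1 := \matrix_(i < n.+1, j < n.+1) P i j.
case: (eqVneq (\det Pm^T) 0) => hd.
- left; move/eqP: hd => /det0P [v nv hv].
  exists (fun k => if (k < n.+1)%N then v ord0 (inord k) else 0); split.
  + have [j hj] : exists j, v ord0 j <> 0.
      apply: Classical_Prop.NNPP => H; move/negP: nv; apply; apply/eqP/matrixP => i j.
      rewrite (ord1 i) mxE; apply: Classical_Prop.NNPP => H2; apply: H; by exists j.
    by exists j; split; [apply/ltP | rewrite ltn_ord inord_val].
  + move=> i /ltP hi; have := congr1 (fun M : 'M[R]_(1, n.+1) => M ord0 (Ordinal hi)) hv.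
    rewrite !mxE /mvec rsum_big => H; apply: (eq_trans _ H); apply: eq_bigr => k _.
    by rewrite ltn_ord inord_val !mxE mulrC.
- right; have hu : Pm \in unitmx by rewrite unitmxE unitfE -det_tr.
  exists (fun k j => invmx Pm (inord k) (inord j)) => i j /ltP hi /ltP hj.
  rewrite /mmul rsum_big.
  transitivity ((Pm *m invmx Pm) (Ordinal hi) (Ordinal hj)).
  + rewrite mxE; apply: eq_bigr => k _; rewrite mxE inord_val.
    by congr (_ * invmx Pm _ _); apply: val_inj; rewrite /= inordK.
  + rewrite (mulmxV hu) mxE /= /idm.
    case: (Nat.eq_dec i j) => [e|ne].
      have -> : Ordinal hi = Ordinal hj by apply: val_inj; exact: e.
      by rewrite eqxx.
    by case: eqP => // [[e]]; case: ne.
Qed.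

End DetDichotomy.

Lemma mmul_shift_l n N B r i j : (i < n)%nat ->
  mmul n (msub (mscale r idm) N) B i j = r * B i j - mmul n N B i j.
Proof.
  intros Hi. unfold mmul, msub, mscale.
  rewrite (rsum_ext n _ (fun k => r * (idm i k * B k j) - N i k * B k j)) by (intros; ring).
  rewrite rsum_sub, rsum_scal_l, rsum_delta_l; auto.
Qed.

Lemma mmul_shift_r n N S t i j : (j < n)%nat ->
  mmul n S (msub (mscale t idm) N) i j = t * S i j - mmul n S N i j.
Proof.
  intros Hj. unfold mmul, msub, mscale.
  rewrite (rsum_ext n _ (fun k => t * (S i k * idm k j) - S i k * N k j)) by (intros; ring).
  rewrite rsum_sub, rsum_scal_l, rsum_delta_r; auto.
Qed.

Lemma mvec_shift n N r y i : (i < n)%nat ->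
  mvec n (msub (mscale r idm) N) y i = r * y i - mvec n N y i.
Proof.
  intros Hi. unfold mvec, msub, mscale.
  rewrite (rsum_ext n _ (fun j => r * (idm i j * y j) - N i j * y j)) by (intros; ring).
  rewrite rsum_sub, rsum_scal_l, rsum_delta_l; auto.
Qed.

Definition msum (n : nat) (M : mat) : R := rsum n (fun i => rsum n (fun j => M i j)).

Lemma Rabs_msum_le n M : Rabs (msum n M) <= mnorm n M.
Proof.
  eapply Rle_trans; [apply rsum_abs|]. apply rsum_le; intros; apply rsum_abs.
Qed.

Lemma mnorm_mmul_nonneg_l n S B : nonneg_mat n S -> mnorm n (mmul n S B) <= mnorm n B * msum n S.
Proof.
  intros HS. unfold msum. rewrite <- rsum_scal_l. apply rsum_le. intros i Hi.
  apply Rle_trans with (rsum n (fun j => rsum n (fun l => S i l * Rabs (B l j)))).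
  - apply rsum_le; intros j Hj. eapply Rle_trans; [apply rsum_abs|].
    apply rsum_le; intros l Hl. rewrite Rabs_mult, (Rabs_pos_eq (S i l)); auto. lra.
  - rewrite rsum_swap, <- rsum_scal_l. apply rsum_le; intros l Hl. rewrite rsum_scal_l.
    rewrite Rmult_comm. apply Rmult_le_compat_r; [auto | apply mnorm_row; auto].
Qed.

(* From [S = B - eta S B] with [S >= 0]: the total mass [m] of [S] satisfies
   [m <= |B| + eta |B| m], hence [m <= 2 |B|], and the row sums of [B] differ
   from those of [S] (at least [S i i >= 1/t]) by at most [eta |B| m]. *)
Lemma perturbed_inverse_row_sum_pos n (S B : mat) eta t :
  nonneg_mat n S -> (forall i, (i < n)%nat -> / t <= S i i) ->
  meq n S (fun i j => B i j - eta * mmul n S B i j) ->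
  0 <= eta -> eta * mnorm n B <= / 2 -> 2 * eta * mnorm n B * mnorm n B < / t ->
  forall i, (i < n)%nat -> 0 < rsum n (B i).
Proof.
  intros HS0 HSd HSB Heta Hq1 Hq2 i Hi.
  set (bB := mnorm n B) in *. assert (HbB : 0 <= bB) by apply mnorm_nonneg.
  set (m := msum n S).
  assert (Hm0 : 0 <= m) by (apply rsum_nonneg; intros; apply rsum_nonneg; intros; auto).
  assert (HSB_le : mnorm n (mmul n S B) <= bB * m) by (apply mnorm_mmul_nonneg_l; auto).
  assert (Hmass : m <= bB + eta * (bB * m)).
  { assert (E : m = msum n B - eta * msum n (mmul n S B)).
    { unfold m, msum. rewrite <- rsum_scal_l, <- rsum_sub. apply rsum_ext; intros i' Hi'.
      rewrite <- rsum_scal_l, <- rsum_sub. apply rsum_ext; intros; apply HSB; auto. }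
    pose proof (Rabs_msum_le n B) as HB. fold bB in HB.
    pose proof (Rabs_msum_le n (mmul n S B)). pose proof (Rle_abs (msum n B)). pose proof (Rabs_maj2 (msum n (mmul n S B))).
    assert (eta * - msum n (mmul n S B) <= eta * (bB * m)) by (apply Rmult_le_compat_l; lra).
    lra. }
  assert (Hm2 : m <= 2 * bB) by nra.
  assert (Hrow : rsum n (B i) = rsum n (S i) + eta * rsum n (mmul n S B i)).
  { rewrite <- rsum_scal_l, <- rsum_add. apply rsum_ext; intros j Hj. rewrite (HSB i j) by auto. ring. }
  assert (S i i <= rsum n (S i)) by (apply rsum_term_le; auto).
  assert (- rsum n (mmul n S B i) <= bB * m).
  { eapply Rle_trans; [|apply HSB_le]. eapply Rle_trans; [apply Rabs_maj2|].
    eapply Rle_trans; [apply rsum_abs | apply mnorm_row; auto]. }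
  specialize (HSd i Hi).
  assert (0 <= eta * bB) by (apply Rmult_le_pos; auto).
  assert (eta * (bB * m) <= 2 * eta * bB * bB) by nra.
  nra.
Qed.

Lemma shift_inverse_row_sums n N B r : meq n (mmul n (msub (mscale r idm) N) B) idm ->
  forall i, (i < n)%nat -> mvec n N (fun i => rsum n (B i)) i = r * rsum n (B i) - 1.
Proof.
  intros HB i Hi.
  assert (Hsum : rsum n (fun l => r * B i l - mmul n N B i l) = 1).
  { rewrite (rsum_ext n _ (fun l => idm i l * 1)).
    - apply rsum_delta_l; auto.
    - intros l Hl. rewrite <- mmul_shift_l, HB by auto. ring. }
  assert (mvec n N (fun i => rsum n (B i)) i = rsum n (mmul n N B i)).
  { unfold mvec, mmul. rewrite <- rsum_swap. apply rsum_ext; intros.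
    rewrite <- rsum_scal_l. reflexivity. }
  rewrite rsum_sub, rsum_scal_l in Hsum. lra.
Qed.

Lemma ex_series_dominated_geometric (u : nat -> R) c s t : 0 <= s < t ->
  (forall k, 0 <= u k <= c * s ^ k) -> ex_series (fun k => u k / t ^ S k).
Proof.
  intros Hst Hu. assert (Ht : 0 < t) by lra.
  apply (@ex_series_le _ R_CompleteNormedModule _ (fun k => (c / t) * (s / t) ^ k)).
  - intros k. unfold norm; simpl. unfold abs; simpl. specialize (Hu k).
    rewrite Rabs_pos_eq
      by (apply Rmult_le_pos; [lra | apply Rlt_le, Rinv_0_lt_compat; exact (pow_lt t (S k) Ht)]).
    unfold Rdiv. rewrite Rpow_mult_distr, pow_inv. simpl (t ^ S k). rewrite Rinv_mult.
    apply Rle_trans with (c * s ^ k * (/ t * / t ^ k)); [|right; ring].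
    apply Rmult_le_compat_r; [|lra].
    apply Rmult_le_pos; apply Rlt_le, Rinv_0_lt_compat; [|apply pow_lt]; auto.
  - apply ex_series_Rscal, ex_series_geom. rewrite Rabs_pos_eq.
    + apply (Rmult_lt_reg_r t); auto. unfold Rdiv. rewrite Rmult_assoc, Rinv_l; lra.
    + apply Rmult_le_pos; [lra | apply Rlt_le, Rinv_0_lt_compat; auto].
Qed.

Section CollatzWielandt.
Variables (n : nat) (N : mat).
Hypothesis HN : nonneg_mat n N.

Lemma subinvariant_nonneg s : (0 < n)%nat -> subinvariant n N s -> 0 <= s.
Proof.
  intros Hn [x [Hx H]].
  assert (0 <= mvec n N x 0%nat)
    by (apply rsum_nonneg; intros; apply Rmult_le_pos; [apply HN | apply Rlt_le, Hx]; auto).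
  specialize (H 0%nat Hn). specialize (Hx 0%nat Hn). nra.
Qed.

Lemma subinvariant_mnorm : subinvariant n N (mnorm n N + 1).
Proof.
  exists onev. split; [intros i _; unfold onev; lra|]. intros i Hi. unfold mvec, onev.
  rewrite Rmult_1_r.
  apply Rle_trans with (rsum n (fun j => Rabs (N i j))).
  - apply rsum_le. intros. rewrite Rmult_1_r. apply Rle_abs.
  - pose proof (mnorm_row n N i Hi). lra.
Qed.

(* [r] is the Collatz-Wielandt value of [N], i.e. its Perron root. *)
Lemma subinvariant_infimum : (0 < n)%nat -> exists r, 0 <= r /\
  (forall s, subinvariant n N s -> r <= s) /\
  (forall t, r < t -> exists s, subinvariant n N s /\ s < t).
Proof.
  intros Hn.
  set (E := fun y => exists s, subinvariant n N s /\ y = - s).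
  destruct (completeness E) as [mm [Hub Hlub]].
  - exists 0. intros y [s [Hs ->]]. pose proof (subinvariant_nonneg s Hn Hs). lra.
  - exists (- (mnorm n N + 1)), (mnorm n N + 1). split; [apply subinvariant_mnorm | auto].
  - exists (- mm). split; [|split].
    + assert (mm <= 0); [|lra]. apply Hlub. intros y [s [Hs ->]].
      pose proof (subinvariant_nonneg s Hn Hs). lra.
    + intros s Hs. assert (- s <= mm) by (apply Hub; exists s; auto). lra.
    + intros t Ht. apply Classical_Prop.NNPP; intros Hno.
      assert (mm <= - t); [|lra]. apply Hlub. intros y [s [Hs ->]].
      destruct (Rlt_or_le s t) as [Hst|Hst]; [exfalso; apply Hno; exists s; auto | lra].
Qed.

(* The Neumann series [(t - N)^-1 = sum_k N^k / t^(k+1)] converges because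
   [N^k = O(s^k)]. *)
Lemma resolvent_nonneg x s t : pos_vec n x -> 0 <= s -> s < t ->
  (forall i, (i < n)%nat -> mvec n N x i <= s * x i) ->
  exists S : mat, nonneg_mat n S /\ (forall i, (i < n)%nat -> / t <= S i i) /\
    meq n (mmul n S (msub (mscale t idm) N)) idm.
Proof.
  intros Hx Hs Hst Hsub.
  destruct (subinvariant_geometric n N x s HN Hx Hs Hsub) as [c [_ Hg]].
  assert (Ht : 0 < t) by lra.
  set (a := fun i j k => mpow n N k i j / t ^ (S k)).
  assert (Ha0 : forall i j k, (i < n)%nat -> (j < n)%nat -> 0 <= a i j k).
  { intros. apply Rmult_le_pos; [apply mpow_nonneg; auto|].
    apply Rlt_le, Rinv_0_lt_compat, pow_lt; auto. }
  assert (Hex : forall i j, (i < n)%nat -> (j < n)%nat -> ex_series (a i j)).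
  { intros i j Hi Hj. apply (ex_series_dominated_geometric _ c s t); [lra|].
    intros k; split; [apply mpow_nonneg | apply Hg]; auto. }
  assert (Ha_first : forall i j, (i < n)%nat -> (j < n)%nat ->
            Series (a i j) = idm i j / t + Series (fun k => a i j (S k))).
  { intros i j Hi Hj. rewrite Series_incr_1 by auto. unfold a at 1. simpl. f_equal. field. lra. }
  exists (fun i j => Series (a i j)). split; [|split].
  - intros i j Hi Hj. apply Series_nonneg; auto.
  - intros i Hi. rewrite Ha_first by auto. unfold idm. destruct (Nat.eq_dec i i); [|lia].
    assert (0 <= Series (fun k => a i i (S k))).
    { apply Series_nonneg; [auto | apply (ex_series_incr_1 (a i i)); auto]. }
    unfold Rdiv. lra.
  - intros i j Hi Hj. rewrite mmul_shift_r by auto.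
    assert (E : mmul n (fun i j => Series (a i j)) N i j = Series (fun k => a i j (S k)) * t).
    { unfold mmul. transitivity (rsum n (fun l => Series (fun k => a i l k * N l j))).
      - apply rsum_ext; intros. rewrite Series_scal_r; auto.
      - rewrite <- Series_rsum by (intros; apply ex_series_scal_r; auto).
        rewrite <- Series_scal_r. apply Series_ext. intros k. unfold a.
        rewrite (mpow_S_r n N k i j Hi Hj). unfold mmul, Rdiv.
        rewrite Rmult_assoc, <- rsum_scal_r.
        assert (t ^ k <> 0) by (apply pow_nonzero; lra).
        apply rsum_ext; intros l Hl. simpl pow. field. split; lra. }
    rewrite E, Ha_first by auto. field. lra.
Qed.

Lemma resolvent_identity (S B : mat) r t :
  meq n (mmul n S (msub (mscale t idm) N)) idm ->
  meq n (mmul n (msub (mscale r idm) N) B) idm ->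
  meq n S (fun i j => B i j - (t - r) * mmul n S B i j).
Proof.
  intros HS HB i j Hi Hj.
  assert (HSr : forall k, (k < n)%nat ->
            mmul n S (msub (mscale r idm) N) i k = idm i k - (t - r) * S i k).
  { intros k Hk. rewrite <- (HS i k Hi Hk), !mmul_shift_r by auto. ring. }
  transitivity (mmul n S (mmul n (msub (mscale r idm) N) B) i j).
  - rewrite (mmul_ext n S S _ idm) by (auto; intros; apply HB; auto).
    rewrite mmul_idm_r; auto.
  - rewrite <- mmul_assoc, (mmul_ext n _ (fun i k => idm i k - (t - r) * S i k) B B) by auto.
    unfold mmul at 1.
    rewrite (rsum_ext n _ (fun k => idm i k * B k j - (t - r) * (S i k * B k j))) by (intros; ring).
    rewrite rsum_sub, rsum_delta_l, rsum_scal_l by auto. reflexivity.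
Qed.

(* If [r - N] had an inverse [B], a resolvent just above [r] would force
   [B 1 > 0], and [N (B 1) = r (B 1) - 1] would contradict the minimality of [r]. *)
Lemma infimum_shift_not_invertible r B : (0 < n)%nat -> 0 <= r ->
  (forall s, subinvariant n N s -> r <= s) ->
  (forall t, r < t -> exists s, subinvariant n N s /\ s < t) ->
  ~ meq n (mmul n (msub (mscale r idm) N) B) idm.
Proof.
  intros Hn Hr Hinf Happ HB.
  set (bB := mnorm n B). assert (HbB : 0 <= bB) by apply mnorm_nonneg.
  set (eta := / (4 * ((bB + 1) * (bB + 1)) * (r + 1))).
  assert (Heta : 0 < eta) by (unfold eta; apply Rinv_0_lt_compat; nra).
  assert (Hq : eta * ((bB + 1) * (bB + 1)) = / (4 * (r + 1))) by (unfold eta; field; nra).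
  assert (Hq4 : / (4 * (r + 1)) <= / 4) by (apply Rinv_le_contravar; lra).
  assert (Hbig : bB * bB <= (bB + 1) * (bB + 1)) by nra.
  assert (Heta4 : eta <= / 4) by nra.
  set (t := r + eta).
  destruct (Happ t ltac:(unfold t; lra)) as [s [[x [Hx Hsx]] Hst]].
  destruct (resolvent_nonneg x s t Hx (subinvariant_nonneg s Hn (ex_intro _ x (conj Hx Hsx)))
              Hst Hsx) as [S [HS0 [HSd HSi]]].
  pose proof (resolvent_identity S B r t HSi HB) as Hid.
  replace (t - r) with eta in Hid by (unfold t; ring).
  assert (Hrow : forall i, (i < n)%nat -> 0 < rsum n (B i)).
  { assert (Hb1 : eta * bB <= eta * ((bB + 1) * (bB + 1)))
      by (apply Rmult_le_compat_l; nra).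
    assert (Hb2 : eta * (bB * bB) <= eta * ((bB + 1) * (bB + 1)))
      by (apply Rmult_le_compat_l; nra).
    apply (perturbed_inverse_row_sum_pos n S B eta t); fold bB; auto; [lra|lra|].
    assert (2 * eta * bB * bB <= / (2 * (r + 1))).
    { apply Rle_trans with (2 * (eta * ((bB + 1) * (bB + 1)))); [lra|].
      rewrite Hq. right. field. lra. }
    eapply Rle_lt_trans; [eauto|]. apply Rinv_lt_contravar; unfold t; nra. }
  set (xx := fun i => rsum n (B i)).
  pose proof (shift_inverse_row_sums n N B r HB) as Hxx.
  set (X := rsum n xx).
  assert (HX : 0 < X) by (apply Rlt_le_trans with (xx 0%nat); [apply Hrow | apply pos_vec_le_sum]; auto).
  assert (r <= r - / X); [|pose proof (Rinv_0_lt_compat X HX); lra].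
  apply Hinf. exists xx. split; [exact Hrow|]. intros i Hi.
  rewrite Hxx by auto. change (rsum n (B i)) with (xx i). pose proof (Hrow i Hi).
  assert (xx i <= X) by (apply pos_vec_le_sum; auto).
  assert (xx i / X <= 1).
  { apply (Rmult_le_reg_r X); auto. unfold Rdiv. rewrite Rmult_assoc, Rinv_l; lra. }
  replace ((r - / X) * xx i) with (r * xx i - xx i / X) by (field; lra). lra.
Qed.

End CollatzWielandt.

Lemma Schur_stable_right_contractive n N : nonneg_mat n N -> Schur_stable n N ->
  right_contractive n N.
Proof.
  intros HN HS.
  destruct n as [|n']; [exists onev; split; intros i Hi; lia|].
  destruct (subinvariant_infimum (S n') N HN ltac:(lia)) as [r [Hr [Hinf Happ]]].
  destruct (Rlt_or_le r 1) as [Hr1|Hr1].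
  - destruct (Happ 1 Hr1) as [s [[x [Hx Hsx]] Hs1]]. exists x. split; auto. intros i Hi.
    specialize (Hsx i Hi). specialize (Hx i Hi). nra.
  - exfalso.
    destruct (DetDichotomy.singular_or_right_invertible (S n') (msub (mscale r idm) N))
      as [[y [Hy0 Hy]] | [B HB]].
    + assert (r * r + 0 * 0 < 1); [|nra].
      apply (HS y (fun _ => 0) r 0); [destruct Hy0 as [i [Hi Hyi]]; exists i; auto | |];
        intros i Hi.
      * specialize (Hy i Hi). rewrite mvec_shift in Hy by auto. lra.
      * unfold mvec. rewrite rsum_eq0 by (intros; ring). ring.
    + exact (infimum_shift_not_invertible (S n') N HN r B ltac:(lia) Hr Hinf Happ HB).
Qed.

(** * The matrix exponential *)

Definition mexpt (n : nat) (A : mat) (t : R) : mat := mexp n (mscale t A).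

Definition exp_coef (n : nat) (A : mat) (i j k : nat) : R := mpow n A k i j / INR (fact k).

Lemma inv_fact_pos k : 0 < / INR (fact k).
Proof. apply Rinv_0_lt_compat, lt_0_INR, lt_O_fact. Qed.

Lemma exp_coef_abs_le n A i j k s : (i < n)%nat -> (j < n)%nat ->
  Rabs (exp_coef n A i j k * s ^ k) <= / INR (fact k) * (mnorm n A * Rabs s) ^ k.
Proof.
  intros Hi Hj. unfold exp_coef, Rdiv.
  rewrite !Rabs_mult, (Rabs_pos_eq (/ INR (fact k))) by apply Rlt_le, inv_fact_pos.
  rewrite Rpow_mult_distr, RPow_abs.
  pose proof (mpow_entry_bound n A k i j Hi Hj). pose proof (inv_fact_pos k).
  pose proof (Rabs_pos (s ^ k)).
  apply Rle_trans with (mnorm n A ^ k * / INR (fact k) * Rabs (s ^ k)); [|right; ring].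
  apply Rmult_le_compat_r; [auto|]. apply Rmult_le_compat_r; lra.
Qed.

Lemma ex_series_exp c : ex_series (fun k => / INR (fact k) * c ^ k).
Proof. apply ex_pseries_R. eexists. apply is_exp_Reals. Qed.

Lemma ex_series_exp_coef n A i j s : (i < n)%nat -> (j < n)%nat ->
  ex_series (fun k => exp_coef n A i j k * s ^ k).
Proof.
  intros Hi Hj.
  apply (@ex_series_le _ R_CompleteNormedModule _
           (fun k => / INR (fact k) * (mnorm n A * Rabs s) ^ k)).
  - intros k. apply exp_coef_abs_le; auto.
  - apply ex_series_exp.
Qed.

Lemma Un_cv0_bounded u : Un_cv u 0 -> exists M, forall k, Rabs (u k) <= M.
Proof.
  intros H. destruct (H 1 ltac:(lra)) as [K HK].
  exists (1 + rsum K (fun k => Rabs (u k))). intros k.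
  assert (0 <= rsum K (fun k => Rabs (u k))) by (apply rsum_nonneg; intros; apply Rabs_pos).
  destruct (Compare_dec.le_lt_dec K k) as [Hk|Hk].
  - specialize (HK k Hk). unfold Rdist in HK. rewrite Rminus_0_r in HK. lra.
  - pose proof (rsum_term_le K (fun k => Rabs (u k)) k ltac:(intros; apply Rabs_pos) Hk).
    simpl in *. lra.
Qed.

Lemma exp_coef_CV_radius n A i j : (i < n)%nat -> (j < n)%nat ->
  CV_radius (exp_coef n A i j) = p_infty.
Proof.
  intros Hi Hj.
  assert (Hb : forall x, exists M, forall k, Rabs (exp_coef n A i j k * x ^ k) <= M).
  { intros x. destruct (Un_cv0_bounded _ (cv_speed_pow_fact (mnorm n A * Rabs x))) as [M HM].
    exists M. intros k. eapply Rle_trans; [apply exp_coef_abs_le; auto|].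
    eapply Rle_trans; [|apply (HM k)]. rewrite Rmult_comm. apply Rle_abs. }
  destruct (CV_radius_bounded (exp_coef n A i j)) as [Hub _].
  destruct (CV_radius (exp_coef n A i j)) as [l| |] eqn:E; auto; exfalso.
  - assert (Rbar_le (l + 1) l) by (apply Hub, Hb). simpl in *. lra.
  - assert (Rbar_le 0 m_infty) by (apply Hub, Hb). auto.
Qed.

Lemma mpow_mscale n A s k i j : mpow n (mscale s A) k i j = s ^ k * mpow n A k i j.
Proof.
  revert i j; induction k; intros i j; simpl; [ring|].
  unfold mmul. rewrite <- rsum_scal_l. apply rsum_ext; intros.
  rewrite IHk. unfold mscale. ring.
Qed.

(* [mexp] is defined through Hilbert's epsilon; it is the power series. *)
Lemma mexpt_PSeries n A s i j : (i < n)%nat -> (j < n)%nat ->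
  mexpt n A s i j = PSeries (exp_coef n A i j) s.
Proof.
  intros Hi Hj.
  assert (Hs : infinite_sum (fun k => mpow n (mscale s A) k i j / INR (fact k))
                            (PSeries (exp_coef n A i j) s)).
  { apply is_series_Reals. unfold PSeries.
    apply (is_series_ext (fun k => exp_coef n A i j k * s ^ k)).
    - intros k. change (exp_coef n A i j k * s ^ k = mpow n (mscale s A) k i j / INR (fact k)).
      unfold exp_coef. rewrite mpow_mscale. unfold Rdiv. ring.
    - apply Series_correct, ex_series_exp_coef; auto. }
  pose proof (epsilon_spec (inhabits 0)
                (fun l => infinite_sum (fun k => mpow n (mscale s A) k i j / INR (fact k)) l)
                (ex_intro _ _ Hs)) as Heps.
  apply is_series_Reals, is_series_unique in Hs.
  apply is_series_Reals, is_series_unique in Heps.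
  unfold mexpt, mexp. congruence.
Qed.

Lemma mexpt_0 n A i j : (i < n)%nat -> (j < n)%nat -> mexpt n A 0 i j = idm i j.
Proof.
  intros. rewrite mexpt_PSeries, PSeries_0 by auto. unfold exp_coef. simpl.
  unfold Rdiv. rewrite Rinv_1. ring.
Qed.

Lemma mexpt_continuous n A i j s : (i < n)%nat -> (j < n)%nat ->
  continuity_pt (fun s => mexpt n A s i j) s.
Proof.
  intros Hi Hj. apply (continuity_pt_ext (PSeries (exp_coef n A i j))).
  - intros; rewrite mexpt_PSeries; auto.
  - apply PSeries_continuity. rewrite exp_coef_CV_radius; simpl; auto.
Qed.

Lemma PSeries_rsum_scal n (c : nat -> R) (a : nat -> nat -> R) s :
  (forall l, (l < n)%nat -> ex_series (fun k => a l k * s ^ k)) ->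
  rsum n (fun l => c l * PSeries (a l) s) = PSeries (fun k => rsum n (fun l => c l * a l k)) s.
Proof.
  intros Hex. unfold PSeries.
  rewrite (rsum_ext n _ (fun l => Series (fun k => c l * (a l k * s ^ k))))
    by (intros; rewrite Series_scal_l; auto).
  rewrite <- Series_rsum by (intros; apply ex_series_Rscal; auto).
  apply Series_ext. intros k. rewrite <- rsum_scal_r. apply rsum_ext; intros; ring.
Qed.

Lemma mexpt_derive n A s i j : (i < n)%nat -> (j < n)%nat ->
  derivable_pt_lim (fun s => mexpt n A s i j) s (mmul n A (mexpt n A s) i j).
Proof.
  intros Hi Hj. apply is_derive_Reals.
  apply (is_derive_ext (PSeries (exp_coef n A i j))); [intros; rewrite mexpt_PSeries; auto|].
  replace (mmul n A (mexpt n A s) i j) with (PSeries (PS_derive (exp_coef n A i j)) s).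
  - apply is_derive_PSeries. rewrite exp_coef_CV_radius; simpl; auto.
  - unfold mmul. rewrite (rsum_ext n _ (fun l => A i l * PSeries (exp_coef n A l j) s))
      by (intros; rewrite mexpt_PSeries; auto).
    rewrite PSeries_rsum_scal by (intros; apply ex_series_exp_coef; auto).
    apply PSeries_ext. intros k. unfold PS_derive, exp_coef.
    simpl (mpow n A (S k) i j). unfold mmul. rewrite fact_simpl, mult_INR.
    assert (0 < INR (fact k)) by apply lt_0_INR, lt_O_fact.
    assert (0 < INR (S k)) by (apply lt_0_INR; lia).
    unfold Rdiv. rewrite <- rsum_scal_r, <- rsum_scal_l.
    apply rsum_ext; intros. field. lra.
Qed.

Lemma mexpt_comm n A s i j : (i < n)%nat -> (j < n)%nat ->
  mmul n A (mexpt n A s) i j = mmul n (mexpt n A s) A i j.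
Proof.
  intros Hi Hj. unfold mmul.
  rewrite (rsum_ext n _ (fun l => A i l * PSeries (exp_coef n A l j) s))
    by (intros; rewrite mexpt_PSeries; auto).
  rewrite (rsum_ext n (fun l => mexpt n A s i l * A l j) (fun l => A l j * PSeries (exp_coef n A i l) s))
    by (intros; rewrite mexpt_PSeries by auto; ring).
  rewrite !PSeries_rsum_scal by (intros; apply ex_series_exp_coef; auto).
  apply PSeries_ext. intros k. unfold exp_coef, Rdiv.
  transitivity (mpow n A (S k) i j * / INR (fact k)).
  - simpl. unfold mmul. rewrite <- rsum_scal_r. apply rsum_ext; intros; ring.
  - rewrite mpow_S_r by auto. unfold mmul. rewrite <- rsum_scal_r. apply rsum_ext; intros; ring.
Qed.

Lemma mexpt_derive_r n A s i j : (i < n)%nat -> (j < n)%nat ->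
  derivable_pt_lim (fun s => mexpt n A s i j) s (mmul n (mexpt n A s) A i j).
Proof. intros. rewrite <- mexpt_comm by auto. apply mexpt_derive; auto. Qed.

Lemma mexpt_bound n A s i j : 0 <= s -> (i < n)%nat -> (j < n)%nat ->
  Rabs (mexpt n A s i j) <= exp (mnorm n A * s).
Proof.
  intros Hs Hi Hj. rewrite mexpt_PSeries by auto. unfold PSeries.
  assert (Hdom : forall k, Rabs (exp_coef n A i j k * s ^ k)
                           <= / INR (fact k) * (mnorm n A * s) ^ k).
  { intros k. rewrite <- (Rabs_pos_eq s) at 2 by auto. apply exp_coef_abs_le; auto. }
  assert (Habs : ex_series (fun k => Rabs (exp_coef n A i j k * s ^ k))).
  { apply (@ex_series_le _ R_CompleteNormedModule _
             (fun k => / INR (fact k) * (mnorm n A * s) ^ k)); [|apply ex_series_exp].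
    intros k. unfold norm; simpl; unfold abs; simpl. rewrite Rabs_Rabsolu. auto. }
  eapply Rle_trans; [apply Series_Rabs; auto|].
  rewrite exp_Reals. unfold PSeries. apply Series_le; [|apply ex_series_exp].
  intros k; split; [apply Rabs_pos | auto].
Qed.

Lemma mexpt_tr n A s i j : (i < n)%nat -> (j < n)%nat ->
  mexpt n (mtr A) s i j = mexpt n A s j i.
Proof.
  intros. rewrite !mexpt_PSeries by auto. apply PSeries_ext. intros k.
  unfold exp_coef. rewrite mpow_tr; auto.
Qed.

Lemma mexpt_nonneg_of_nonneg n A s i j : nonneg_mat n A -> 0 <= s -> (i < n)%nat -> (j < n)%nat ->
  0 <= mexpt n A s i j /\ (i = j -> 1 <= mexpt n A s i j).
Proof.
  intros HA Hs Hi Hj. rewrite mexpt_PSeries by auto. unfold PSeries.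
  assert (Hterm : forall k, 0 <= exp_coef n A i j k * s ^ k).
  { intros k. apply Rmult_le_pos; [|apply pow_le; auto].
    apply Rmult_le_pos; [apply mpow_nonneg; auto | apply Rlt_le, inv_fact_pos]. }
  split; [apply Series_nonneg; auto; apply ex_series_exp_coef; auto|].
  intros ->. rewrite Series_incr_1 by (apply ex_series_exp_coef; auto).
  assert (0 <= Series (fun k => exp_coef n A j j (S k) * s ^ S k)).
  { apply Series_nonneg; [intros; apply Hterm|].
    apply (ex_series_incr_1 (fun k => exp_coef n A j j k * s ^ k)), ex_series_exp_coef; auto. }
  unfold exp_coef at 1. simpl in *. unfold idm. destruct (Nat.eq_dec j j); [|lia].
  unfold Rdiv. rewrite Rinv_1. lra.
Qed.

(** * Linear differential equations *)

Lemma derivable_pt_lim_rsum n (f : nat -> R -> R) (f' : nat -> R) x :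
  (forall i, (i < n)%nat -> derivable_pt_lim (f i) x (f' i)) ->
  derivable_pt_lim (fun r => rsum n (fun i => f i r)) x (rsum n f').
Proof.
  induction n; intros H; simpl; [apply derivable_pt_lim_const|].
  apply (derivable_pt_lim_plus (fun r => rsum n (fun i => f i r)) (f n));
    [apply IHn; intros; apply H | apply H]; lia.
Qed.

Lemma derivable_pt_lim_exp_scal c x :
  derivable_pt_lim (fun r => exp (c * r)) x (c * exp (c * x)).
Proof.
  replace (c * exp (c * x)) with (exp (c * x) * (c * 1)) by ring.
  apply (derivable_pt_lim_comp (fun r => c * r) exp).
  - apply (derivable_pt_lim_scal id c), derivable_pt_lim_id.
  - apply derivable_pt_lim_exp.
Qed.

Lemma derivable_pt_lim_continuity_pt f x l : derivable_pt_lim f x l -> continuity_pt f x.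
Proof. intros H. apply derivable_continuous_pt. exists l; exact H. Qed.

Lemma derivable_pt_lim_ext_loc f g x l a b : a < x < b ->
  (forall r, a < r < b -> f r = g r) -> derivable_pt_lim f x l -> derivable_pt_lim g x l.
Proof.
  intros Hx He H. apply is_derive_Reals. apply is_derive_Reals in H.
  apply (is_derive_ext_loc f g); auto.
  assert (Hd : 0 < Rmin (x - a) (b - x)) by (apply Rmin_pos; lra).
  exists (mkposreal _ Hd). intros r Hr. apply He.
  unfold ball in Hr; simpl in Hr; unfold AbsRing_ball, abs, minus, plus, opp in Hr; simpl in Hr.
  apply Rabs_def2 in Hr. pose proof (Rmin_l (x - a) (b - x)). pose proof (Rmin_r (x - a) (b - x)).
  lra.
Qed.

Lemma nonincreasing_of_derive_nonpos f f' a b s1 s2 : a < s1 -> s1 <= s2 -> s2 < b ->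
  (forall s, a < s < b -> derivable_pt_lim f s (f' s)) -> (forall s, a < s < b -> f' s <= 0) ->
  f s2 <= f s1.
Proof.
  intros H1 H2 H3 Hd Hn. destruct (Req_dec s1 s2) as [<-|ne]; [lra|].
  destruct (MVT_gen f s1 s2 f') as [c [Hc E]];
    rewrite ?Rmin_left, ?Rmax_right in * by lra.
  - intros x Hx. apply is_derive_Reals, Hd. lra.
  - intros x Hx. eapply derivable_pt_lim_continuity_pt, Hd. lra.
  - assert (f' c <= 0) by (apply Hn; lra).
    assert (f' c * (s2 - s1) <= 0) by (apply Rmult_le_0_r; lra). lra.
Qed.

Lemma continuity_pt_small f x0 : continuity_pt f x0 -> forall eps, 0 < eps ->
  exists del, 0 < del /\ forall s, Rabs (s - x0) < del -> Rabs (f s - f x0) < eps.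
Proof.
  intros H eps Heps. destruct (H eps Heps) as [del [Hdel H2]]. exists del; split; auto.
  intros s Hs. destruct (Req_dec s x0) as [->|ne].
  - rewrite Rminus_eq_0, Rabs_R0; auto.
  - apply (H2 s (conj (conj I (not_eq_sym ne)) Hs)).
Qed.

Lemma fin_small_enough n (P : nat -> R -> Prop) :
  (forall i, (i < n)%nat -> exists d, 0 < d /\ forall d', 0 < d' <= d -> P i d') ->
  exists d, 0 < d /\ forall i, (i < n)%nat -> forall d', 0 < d' <= d -> P i d'.
Proof.
  induction n; intros H; [exists 1; split; [lra | intros; lia]|].
  destruct IHn as [d1 [Hd1 H1]]; [intros; apply H; lia|].
  destruct (H n) as [d2 [Hd2 H2]]; [lia|].
  exists (Rmin d1 d2). split; [apply Rmin_pos; auto|].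
  intros i Hi d' Hd'. pose proof (Rmin_l d1 d2). pose proof (Rmin_r d1 d2).
  destruct (Nat.eq_dec i n) as [->|ne]; [apply H2; lra | apply H1; [lia | lra]].
Qed.

Lemma dot_mvec_self_le n A (v : vec) :
  rsum n (fun i => v i * mvec n A v i) <= mnorm n A * rsum n (fun i => v i * v i).
Proof.
  unfold mvec.
  apply Rle_trans with
    (rsum n (fun i => rsum n (fun j => Rabs (A i j) * (v i * v i) / 2 + Rabs (A i j) * (v j * v j) / 2))).
  { apply rsum_le; intros i Hi. rewrite <- rsum_scal_l. apply rsum_le; intros j Hj.
    assert (v i * (A i j * v j) <= Rabs (A i j) * Rabs (v i * v j)).
    { replace (v i * (A i j * v j)) with (A i j * (v i * v j)) by ring.
      rewrite <- Rabs_mult. apply Rle_abs. }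
    assert (Rabs (v i * v j) <= (v i * v i + v j * v j) / 2).
    { rewrite Rabs_mult. pose proof (Rabs_pos (v i)). pose proof (Rabs_pos (v j)).
      rewrite <- (Rabs_pos_eq (v i * v i)), <- (Rabs_pos_eq (v j * v j)), !Rabs_mult by nra.
      pose proof (Rle_0_sqr (Rabs (v i) - Rabs (v j))) as HH. unfold Rsqr in HH. nra. }
    pose proof (Rabs_pos (A i j)). nra. }
  rewrite (rsum_ext n _ (fun i => rsum n (fun j => Rabs (A i j) * (v i * v i) / 2)
                                + rsum n (fun j => Rabs (A i j) * (v j * v j) / 2)))
    by (intros; apply rsum_add).
  rewrite rsum_add, (rsum_swap n n (fun i j => Rabs (A i j) * (v j * v j) / 2)).
  assert (Hhalf : rsum n (fun i => mnorm n A * (v i * v i / 2))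
                  = mnorm n A * rsum n (fun i => v i * v i) / 2).
  { rewrite rsum_scal_l. unfold Rdiv. rewrite rsum_scal_r. ring. }
  assert (H1 : rsum n (fun i => rsum n (fun j => Rabs (A i j) * (v i * v i) / 2))
               <= rsum n (fun i => mnorm n A * (v i * v i / 2))).
  { apply rsum_le; intros i Hi.
    rewrite (rsum_ext n _ (fun j => Rabs (A i j) * (v i * v i / 2))) by (intros; unfold Rdiv; ring).
    rewrite rsum_scal_r. apply Rmult_le_compat_r; [nra | apply mnorm_row; auto]. }
  assert (H2 : rsum n (fun j => rsum n (fun i => Rabs (A i j) * (v j * v j) / 2))
               <= rsum n (fun j => mnorm n A * (v j * v j / 2))).
  { apply rsum_le; intros j Hj.
    rewrite (rsum_ext n _ (fun i => Rabs (A i j) * (v j * v j / 2))) by (intros; unfold Rdiv; ring).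
    rewrite rsum_scal_r. apply Rmult_le_compat_r; [nra | apply mnorm_col; auto]. }
  lra.
Qed.

Lemma exp_le_compat x y : x <= y -> exp x <= exp y.
Proof. intros H. destruct (Req_dec x y) as [->|ne]; [lra | left; apply exp_increasing; lra]. Qed.

Definition sqnorm (n : nat) (v : vec) : R := rsum n (fun i => v i * v i).

Lemma sqnorm_nonneg n v : 0 <= sqnorm n v.
Proof. apply rsum_nonneg; intros; nra. Qed.

Section LinearODE.
Variables (n : nat) (A : mat) (a b : R) (y : R -> vec).
Hypothesis Hy : forall s, a < s < b -> forall i, (i < n)%nat ->
  derivable_pt_lim (fun r => y r i) s (mvec n A (y s) i).

Lemma sqnorm_gronwall s1 s : a < s1 -> s1 <= s -> s < b ->
  sqnorm n (y s) <= exp (2 * mnorm n A * (s - s1)) * sqnorm n (y s1).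
Proof.
  intros H1 H2 H3. set (K := 2 * mnorm n A).
  set (phi := fun r => sqnorm n (y r)).
  set (dphi := fun r => rsum n (fun i => 2 * (y r i * mvec n A (y r) i))).
  assert (Hphi : forall r, a < r < b -> derivable_pt_lim phi r (dphi r)).
  { intros r Hr. apply (derivable_pt_lim_rsum n (fun i r => y r i * y r i)). intros i Hi.
    replace (2 * (y r i * mvec n A (y r) i))
      with (mvec n A (y r) i * y r i + y r i * mvec n A (y r) i) by ring.
    apply (derivable_pt_lim_mult (fun r => y r i) (fun r => y r i)); apply Hy; auto. }
  assert (Hbd : forall r, dphi r <= K * phi r).
  { intros r. unfold dphi, K, phi, sqnorm. rewrite rsum_scal_l.
    pose proof (dot_mvec_self_le n A (y r)). lra. }
  set (psi := fun r => exp (- K * r) * phi r).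
  assert (Hmono : psi s <= psi s1).
  { apply (nonincreasing_of_derive_nonpos psi (fun r => - K * exp (- K * r) * phi r
                                                     + exp (- K * r) * dphi r) a b); auto.
    - intros r Hr. apply (derivable_pt_lim_mult (fun r => exp (- K * r)) phi);
        [apply derivable_pt_lim_exp_scal | apply Hphi; auto].
    - intros r Hr. pose proof (exp_pos (- K * r)). specialize (Hbd r). nra. }
  unfold psi in Hmono.
  replace (exp (K * (s - s1))) with (exp (K * s) * exp (- K * s1))
    by (rewrite <- exp_plus; f_equal; ring).
  replace (sqnorm n (y s)) with (exp (K * s) * (exp (- K * s) * phi s))
    by (rewrite <- Rmult_assoc, <- exp_plus; replace (K * s + - K * s) with 0 by ring;
        rewrite exp_0; unfold phi; ring).
  rewrite Rmult_assoc. apply Rmult_le_compat_l; [apply Rlt_le, exp_pos | auto].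
Qed.

(* Gronwall's inequality propagates the smallness of [y] near [a] to all of
   [(a, b)]. *)
Lemma linear_ode_zero :
  (forall i, (i < n)%nat -> forall eps, 0 < eps -> exists del, 0 < del /\
     forall s, a < s < b -> s - a < del -> Rabs (y s i) < eps) ->
  forall s, a < s < b -> forall i, (i < n)%nat -> y s i = 0.
Proof.
  intros Hl s Hs i0 Hi0.
  set (C := exp (2 * mnorm n A * (b - a)) * INR n).
  assert (HC : 0 <= C) by (apply Rmult_le_pos; [apply Rlt_le, exp_pos | apply pos_INR]).
  assert (Hphi : sqnorm n (y s) <= 0).
  { apply Rle_plus_epsilon. intros eps Heps. rewrite Rplus_0_l.
    set (e := Rmin 1 (eps / (C + 1))).
    assert (He : 0 < e) by (apply Rmin_pos; [lra | apply Rdiv_lt_0_compat; lra]).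
    destruct (fin_small_enough n (fun i d => forall s1, a < s1 < b -> s1 - a < d ->
                                             Rabs (y s1 i) < e)) as [d [Hd0 Hd]].
    { intros i Hi. destruct (Hl i Hi e He) as [del [Hdel Hdel2]]. exists del. split; auto.
      intros d' Hd' s1 Hs1 Hs1'. apply Hdel2; auto. lra. }
    set (s1 := a + Rmin (d / 2) ((s - a) / 2)).
    assert (Hs1 : a < s1 <= s /\ s1 - a < d).
    { pose proof (Rmin_l (d / 2) ((s - a) / 2)). pose proof (Rmin_r (d / 2) ((s - a) / 2)).
      assert (0 < Rmin (d / 2) ((s - a) / 2)) by (apply Rmin_pos; lra). unfold s1. lra. }
    assert (Hsmall : sqnorm n (y s1) <= INR n * e).
    { unfold sqnorm. rewrite <- rsum_const. apply rsum_le. intros i Hi.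
      assert (Rabs (y s1 i) < e) by (apply (Hd i Hi d); lra).
      assert (e <= 1) by apply Rmin_l. pose proof (Rabs_pos (y s1 i)).
      replace (y s1 i * y s1 i) with (Rabs (y s1 i) * Rabs (y s1 i))
        by (rewrite <- Rabs_mult; apply Rabs_pos_eq; nra).
      nra. }
    assert (Hexp : exp (2 * mnorm n A * (s - s1)) <= exp (2 * mnorm n A * (b - a))).
    { apply exp_le_compat, Rmult_le_compat_l; [pose proof (mnorm_nonneg n A); lra | lra]. }
    assert (Hce : C * e <= eps).
    { apply Rle_trans with (C * (eps / (C + 1))); [apply Rmult_le_compat_l; [auto | apply Rmin_r]|].
      apply (Rmult_le_reg_r (C + 1)); [lra|]. unfold Rdiv.
      replace (C * (eps * / (C + 1)) * (C + 1)) with (C * eps) by (field; lra). nra. }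
    pose proof (sqnorm_gronwall s1 s ltac:(lra) ltac:(lra) ltac:(lra)).
    pose proof (sqnorm_nonneg n (y s1)). pose proof (exp_pos (2 * mnorm n A * (s - s1))).
    assert (exp (2 * mnorm n A * (s - s1)) * sqnorm n (y s1) <= C * e); [|lra].
    replace (C * e) with (exp (2 * mnorm n A * (b - a)) * (INR n * e)) by (unfold C; ring).
    apply Rmult_le_compat; auto; lra. }
  assert (y s i0 * y s i0 <= sqnorm n (y s))
    by (apply (rsum_term_le n (fun i => y s i * y s i) i0); auto; intros; nra).
  nra.
Qed.

End LinearODE.

Lemma mexpt_derive_comp n A u u' r i j : (i < n)%nat -> (j < n)%nat ->
  derivable_pt_lim u r u' ->
  derivable_pt_lim (fun r => mexpt n A (u r) i j) r (mmul n A (mexpt n A (u r)) i j * u').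
Proof.
  intros Hi Hj Hu.
  apply (derivable_pt_lim_comp u (fun s => mexpt n A s i j)); [auto | apply mexpt_derive; auto].
Qed.

Lemma mexpt_derive_comp_r n A u u' r i j : (i < n)%nat -> (j < n)%nat ->
  derivable_pt_lim u r u' ->
  derivable_pt_lim (fun r => mexpt n A (u r) i j) r (mmul n (mexpt n A (u r)) A i j * u').
Proof. intros. rewrite <- mexpt_comm by auto. apply mexpt_derive_comp; auto. Qed.

Lemma derivable_pt_lim_shift a r : derivable_pt_lim (fun r => r - a) r 1.
Proof.
  replace 1 with (1 - 0) by ring.
  apply (derivable_pt_lim_minus id (fun _ => a)); [apply derivable_pt_lim_id | apply derivable_pt_lim_const].
Qed.

Lemma derivable_pt_lim_reflect b r : derivable_pt_lim (fun r => b - r) r (-1).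
Proof.
  replace (-1) with (0 - 1) by ring.
  apply (derivable_pt_lim_minus (fun _ => b) id); [apply derivable_pt_lim_const | apply derivable_pt_lim_id].
Qed.

(* [A + c I] is nonnegative for [c] large, and [e^(tA) = e^(-ct) e^(t(A + cI))]:
   both sides solve [y' = A y] from [I]. *)
Lemma mexpt_shift n A c r i j : 0 <= r -> (i < n)%nat -> (j < n)%nat ->
  mexpt n A r i j = exp (- c * r) * mexpt n (fun i j => A i j + c * idm i j) r i j.
Proof.
  intros Hr Hi Hj. set (Ac := fun i j => A i j + c * idm i j).
  destruct (Req_dec r 0) as [->|nr].
  { rewrite !mexpt_0 by auto. replace (- c * 0) with 0 by ring. rewrite exp_0; ring. }
  set (y := fun r i => exp (- c * r) * mexpt n Ac r i j - mexpt n A r i j).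
  assert (Hy0 : y r i = 0); [|unfold y in Hy0; lra].
  apply (linear_ode_zero n A 0 (r + 1)); [| |lra|auto].
  - intros s Hs k Hk.
    replace (mvec n A (y s) k) with
      (- c * exp (- c * s) * mexpt n Ac s k j + exp (- c * s) * mmul n Ac (mexpt n Ac s) k j
       - mmul n A (mexpt n A s) k j).
    + apply (derivable_pt_lim_minus (fun r => exp (- c * r) * mexpt n Ac r k j)
                                    (fun r => mexpt n A r k j)); [|apply mexpt_derive; auto].
      apply (derivable_pt_lim_mult (fun r => exp (- c * r)) (fun r => mexpt n Ac r k j));
        [apply derivable_pt_lim_exp_scal | apply mexpt_derive; auto].
    + unfold y. rewrite mvec_sub, mvec_scal. unfold mmul at 1.
      rewrite (rsum_ext n (fun l => Ac k l * mexpt n Ac s l j)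
                 (fun l => A k l * mexpt n Ac s l j + c * (idm k l * mexpt n Ac s l j)))
        by (intros; unfold Ac; ring).
      rewrite rsum_add, rsum_scal_l, rsum_delta_l by auto. unfold mmul, mvec. ring.
  - intros k Hk eps Heps.
    assert (Hc : continuity_pt (fun s => y s k) 0).
    { apply continuity_pt_minus; [apply continuity_pt_mult|]; try apply mexpt_continuous; auto.
      apply (derivable_pt_lim_continuity_pt _ _ _ (derivable_pt_lim_exp_scal (- c) 0)). }
    destruct (continuity_pt_small _ 0 Hc eps Heps) as [del [Hdel H2]].
    exists del. split; auto. intros s Hs Hs2.
    replace (y s k) with (y s k - y 0 k).
    + apply H2. rewrite Rminus_0_r, Rabs_pos_eq; lra.
    + unfold y. rewrite !mexpt_0 by auto. replace (- c * 0) with 0 by ring. rewrite exp_0. ring.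
Qed.

Lemma mexpt_Metzler n A s i j : Metzler n A -> 0 <= s -> (i < n)%nat -> (j < n)%nat ->
  0 <= mexpt n A s i j /\ (i = j -> 0 < mexpt n A s i j).
Proof.
  intros HA Hs Hi Hj. set (c := mnorm n A).
  assert (HAc : nonneg_mat n (fun i j => A i j + c * idm i j)).
  { intros i' j' Hi' Hj'. unfold idm. destruct (Nat.eq_dec i' j') as [->|ne].
    - pose proof (mnorm_entry n A j' j' Hj' Hj'). pose proof (Rle_abs (- A j' j')).
      rewrite Rabs_Ropp in *. fold c in H. lra.
    - pose proof (HA i' j' Hi' Hj' ne). lra. }
  rewrite (mexpt_shift n A c s i j) by auto.
  destruct (mexpt_nonneg_of_nonneg n _ s i j HAc Hs Hi Hj) as [H1 H2].
  pose proof (exp_pos (- c * s)). split; [apply Rmult_le_pos; lra|].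
  intros Hij. specialize (H2 Hij). apply Rmult_lt_0_compat; lra.
Qed.

Lemma mexpt_Metzler_nonneg n A s : Metzler n A -> 0 <= s -> nonneg_mat n (mexpt n A s).
Proof. intros HA Hs i j Hi Hj. apply mexpt_Metzler; auto. Qed.

Definition flow (n : nat) (A : mat) (a : R) (w : vec) (r : R) : vec :=
  fun i => mvec n (mexpt n A (r - a)) w i.

Lemma flow_derive n A a w r i : (i < n)%nat ->
  derivable_pt_lim (fun r => flow n A a w r i) r (mvec n A (flow n A a w r) i).
Proof.
  intros Hi. unfold flow.
  replace (mvec n A (fun i => mvec n (mexpt n A (r - a)) w i) i)
    with (rsum n (fun l => mmul n A (mexpt n A (r - a)) i l * 1 * w l)).
  - apply (derivable_pt_lim_rsum n (fun l r => mexpt n A (r - a) i l * w l)). intros l Hl.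
    replace (mmul n A (mexpt n A (r - a)) i l * 1 * w l)
      with (mmul n A (mexpt n A (r - a)) i l * 1 * w l + mexpt n A (r - a) i l * 0) by ring.
    apply (derivable_pt_lim_mult (fun r => mexpt n A (r - a) i l) (fun _ => w l));
      [apply (mexpt_derive_comp n A (fun r => r - a)); [auto | auto | apply derivable_pt_lim_shift]
      | apply derivable_pt_lim_const].
  - rewrite <- mvec_mmul. unfold mvec. apply rsum_ext; intros; ring.
Qed.

Lemma flow_continuous n A a w r i : (i < n)%nat -> continuity_pt (fun r => flow n A a w r i) r.
Proof. intros. eapply derivable_pt_lim_continuity_pt, flow_derive; auto. Qed.

Lemma flow_start n A a w i : (i < n)%nat -> flow n A a w a i = w i.
Proof.
  intros. unfold flow, mvec. rewrite Rminus_eq_0.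
  rewrite (rsum_ext n _ (fun j => idm i j * w j)) by (intros; rewrite mexpt_0; auto).
  apply rsum_delta_l; auto.
Qed.

Lemma limit1_in_continuity_pt f g D x0 : (forall x, D x -> f x = g x) ->
  continuity_pt g x0 -> limit1_in f D (g x0) x0.
Proof.
  intros He Hc eps Heps. destruct (continuity_pt_small g x0 Hc eps Heps) as [del [Hdel H2]].
  exists del; split; auto. intros x [Dx Hx]. rewrite He by auto. apply H2, Hx.
Qed.

Lemma solution_eq_flow n A (x : R -> vec) a b (z : vec) : a < b ->
  (forall s, a < s < b -> forall i, (i < n)%nat ->
     derivable_pt_lim (fun r => x r i) s (mvec n A (x s) i)) ->
  (forall i, (i < n)%nat -> limit1_in (fun r => x r i) (fun r => a < r < b) (z i) a) ->
  forall s, a < s < b -> forall i, (i < n)%nat -> x s i = flow n A a z s i.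
Proof.
  intros Hab Hd Hl s Hs i Hi.
  set (y := fun r i => x r i - flow n A a z r i).
  assert (y s i = 0); [|unfold y in *; lra].
  apply (linear_ode_zero n A a b y); auto.
  - intros s' Hs' k Hk. unfold y. rewrite mvec_sub.
    apply (derivable_pt_lim_minus (fun r => x r k) (fun r => flow n A a z r k));
      [apply Hd | apply flow_derive]; auto.
  - intros k Hk eps Heps.
    destruct (Hl k Hk (eps / 2) ltac:(lra)) as [d1 [Hd1 H1]].
    destruct (continuity_pt_small (fun r => flow n A a z r k) a (flow_continuous n A a z a k Hk)
                (eps / 2) ltac:(lra)) as [d2 [Hd2 H2]].
    rewrite flow_start in H2 by auto.
    exists (Rmin d1 d2). split; [apply Rmin_pos; auto|].
    intros s' Hs' Hs2. pose proof (Rmin_l d1 d2). pose proof (Rmin_r d1 d2).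
    assert (Habs : Rabs (s' - a) < Rmin d1 d2) by (rewrite Rabs_pos_eq; lra).
    assert (Hd1' : R_dist s' a < d1) by (unfold R_dist; lra).
    specialize (H1 s' (conj Hs' Hd1')). simpl in H1. unfold R_dist in H1.
    specialize (H2 s' ltac:(lra)).
    unfold y. replace (x s' k - flow n A a z s' k)
      with ((x s' k - z k) - (flow n A a z s' k - z k)) by ring.
    eapply Rle_lt_trans; [apply Rabs_triang|]. rewrite Rabs_Ropp. lra.
Qed.

(** * Solutions of the impulsive system *)

Lemma impulse_times_affine (tk : nat -> R) T : (forall k, tk (S k) - tk k = T) ->
  forall k, tk k = tk 0%nat + INR k * T.
Proof. intros H k. induction k; [simpl; ring|]. rewrite S_INR. specialize (H k). lra. Qed.

Lemma impulse_interval (tk : nat -> R) T : 0 < T -> (forall k, tk (S k) - tk k = T) ->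
  forall t, tk 0%nat <= t -> exists k, tk k <= t < tk (S k).
Proof.
  intros HT H t Ht. pose proof (impulse_times_affine tk T H) as F.
  assert (Hm : forall m, t < tk 0%nat + INR m * T -> exists k, tk k <= t < tk (S k)).
  { induction m; intros Hm; [simpl in Hm; lra|].
    destruct (Rlt_or_le t (tk 0%nat + INR m * T)) as [h|h]; [apply IHm; auto|].
    exists m. rewrite (F m), (F (S m)). split; auto. }
  destruct (archimed ((t - tk 0%nat) / T)) as [H1 _].
  assert (0 <= (t - tk 0%nat) / T) by (apply Rdiv_le_0_compat; lra).
  apply (Hm (Z.to_nat (up ((t - tk 0%nat) / T)))).
  rewrite INR_IZR_INZ, Z2Nat.id by (apply le_IZR; lra).
  apply (Rmult_lt_compat_r T) in H1; auto. unfold Rdiv in H1.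
  rewrite Rmult_assoc, Rinv_l, Rmult_1_r in H1; lra.
Qed.

Lemma adhDa_right a b : a < b -> adhDa (fun r => a < r < b) b.
Proof.
  intros Hab alp Halp.
  pose proof (Rmax_l (a + (b - a) / 2) (b - alp / 2)). pose proof (Rmax_r (a + (b - a) / 2) (b - alp / 2)).
  assert (Rmax (a + (b - a) / 2) (b - alp / 2) < b) by (unfold Rmax; destruct (Rle_dec _ _); lra).
  set (r := Rmax (a + (b - a) / 2) (b - alp / 2)) in *.
  exists r. split; [lra|]. simpl. unfold R_dist. rewrite Rabs_left; lra.
Qed.

Section Solution.
Variables (n : nat) (A J : mat) (T : R) (tk : nat -> R) (x0 : vec) (x : R -> vec).
Hypothesis HT : 0 < T.
Hypothesis Htk : forall k, tk (S k) - tk k = T.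
Hypothesis Hsol : is_solution n A J tk x0 x.

Lemma solution_between k t : tk k < t < tk (S k) -> forall i, (i < n)%nat ->
  x t i = flow n A (tk k) (fun i => mvec n J (x (tk k)) i) t i.
Proof.
  intros Ht i Hi. destruct Hsol as [_ [Hd [_ Hjump]]].
  apply (solution_eq_flow n A x (tk k) (tk (S k))); auto; [specialize (Htk k); lra|].
  intros s Hs; apply (Hd k); auto.
Qed.

Lemma solution_at_impulse k : forall i, (i < n)%nat ->
  x (tk k) i = mvec n (mpow n (mmul n (mexpt n A T) J) k) x0 i.
Proof.
  induction k; intros i Hi.
  - destruct Hsol as [H0 _]. rewrite H0, mvec_idm by auto. reflexivity.
  - destruct Hsol as [_ [_ [Hleft _]]].
    assert (Hab : tk k < tk (S k)) by (specialize (Htk k); lra).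
    assert (E : x (tk (S k)) i = flow n A (tk k) (fun i => mvec n J (x (tk k)) i) (tk (S k)) i).
    { apply (single_limit (fun r => x r i) (fun r => tk k < r < tk (S k)) _ _ (tk (S k)));
        [apply adhDa_right; auto | apply Hleft; auto|].
      apply (limit1_in_continuity_pt _
               (fun r => flow n A (tk k) (fun i => mvec n J (x (tk k)) i) r i));
        [|apply flow_continuous; auto].
      intros r Hr. apply (solution_between k); auto. }
    rewrite E. unfold flow. replace (tk (S k) - tk k) with T by (specialize (Htk k); lra).
    simpl (mpow n _ (S k)). rewrite !mvec_mmul.
    apply mvec_ext; auto. intros j Hj. apply mvec_ext; auto.
Qed.

Lemma solution_growth_between k t : tk k <= t < tk (S k) ->
  vnorm n (x t) <= (1 + INR n * INR n * exp (mnorm n A * T) * mnorm n J) * vnorm n (x (tk k)).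
Proof.
  intros Ht. pose proof (vnorm_nonneg n (x (tk k))) as Hv.
  assert (HE : 0 <= INR n * INR n * exp (mnorm n A * T) * mnorm n J).
  { pose proof (pos_INR n). pose proof (exp_pos (mnorm n A * T)). pose proof (mnorm_nonneg n J).
    repeat apply Rmult_le_pos; lra. }
  destruct (Req_dec t (tk k)) as [->|ne]; [nra|].
  rewrite (vnorm_ext n _ (flow n A (tk k) (fun i => mvec n J (x (tk k)) i) t))
    by (intros; apply (solution_between k); auto; lra).
  unfold flow. eapply Rle_trans; [apply vnorm_mvec|].
  assert (Hexp : mnorm n (mexpt n A (t - tk k)) <= INR n * INR n * exp (mnorm n A * T)).
  { apply mnorm_le_const; [apply Rlt_le, exp_pos|]. intros i j Hi Hj.
    eapply Rle_trans; [apply mexpt_bound; auto; lra|].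
    apply exp_le_compat, Rmult_le_compat_l; [apply mnorm_nonneg|]. specialize (Htk k). lra. }
  pose proof (vnorm_mvec n J (x (tk k))). pose proof (mnorm_nonneg n (mexpt n A (t - tk k))).
  pose proof (vnorm_nonneg n (fun i => mvec n J (x (tk k)) i)).
  apply Rle_trans with (INR n * INR n * exp (mnorm n A * T) * (mnorm n J * vnorm n (x (tk k)))).
  - apply Rle_trans with (INR n * INR n * exp (mnorm n A * T) * vnorm n (fun i => mvec n J (x (tk k)) i));
      [apply Rmult_le_compat_r; auto|].
    apply Rmult_le_compat_l; [|auto]. pose proof (pos_INR n). pose proof (exp_pos (mnorm n A * T)).
    repeat apply Rmult_le_pos; lra.
  - nra.
Qed.

End Solution.

Lemma pow_le_one s k : 0 <= s <= 1 -> s ^ k <= 1.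
Proof. intros H. induction k; simpl; [lra|]. assert (0 <= s ^ k) by (apply pow_le; lra). nra. Qed.

Lemma GAS_of_geometric_decay n A J (tk : nat -> R) T C s : 0 < T ->
  (forall k, tk (S k) - tk k = T) -> 0 <= C -> 0 <= s < 1 ->
  (forall x0 x, is_solution n A J tk x0 x ->
     forall k t, tk k <= t < tk (S k) -> vnorm n (x t) <= C * s ^ k * vnorm n x0) ->
  GAS n A J tk.
Proof.
  intros HT Htk HC Hs Hb. pose proof (impulse_times_affine tk T Htk) as F. split.
  - intros eps Heps. exists (eps / (C + 1)). split; [apply Rdiv_lt_0_compat; lra|].
    intros x0 x Hsol Hx0 t Ht. destruct (impulse_interval tk T HT Htk t Ht) as [k Hk].
    eapply Rle_lt_trans; [apply (Hb x0 x Hsol k t Hk)|].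
    assert (s ^ k <= 1) by (apply pow_le_one; lra). assert (0 <= s ^ k) by (apply pow_le; lra).
    pose proof (vnorm_nonneg n x0).
    apply Rle_lt_trans with (C * vnorm n x0); [assert (C * s ^ k <= C) by nra; nra|].
    apply Rle_lt_trans with (C * (eps / (C + 1))); [apply Rmult_le_compat_l; lra|].
    apply (Rmult_lt_reg_r (C + 1)); [lra|]. unfold Rdiv.
    replace (C * (eps * / (C + 1)) * (C + 1)) with (C * eps) by (field; lra). nra.
  - intros x0 x Hsol eps Heps. pose proof (vnorm_nonneg n x0) as Hv0.
    set (D := C * vnorm n x0 + 1). assert (HD : 0 < D) by (unfold D; nra).
    destruct (pow_lt_1_zero s ltac:(rewrite Rabs_pos_eq; lra) (eps / D)) as [K HK];
      [apply Rdiv_lt_0_compat; lra|].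
    exists (tk K). intros t Ht.
    assert (Ht0 : tk 0%nat <= t) by (rewrite (F K) in Ht; pose proof (pos_INR K); nra).
    destruct (impulse_interval tk T HT Htk t Ht0) as [k Hk].
    assert (HKk : (K <= k)%nat).
    { destruct (Compare_dec.le_lt_dec K k) as [h|h]; auto. exfalso.
      rewrite (F K) in Ht. rewrite (F (S k)) in Hk.
      assert (INR (S k) <= INR K) by (apply le_INR; lia). nra. }
    specialize (HK k HKk). rewrite Rabs_pos_eq in HK by (apply pow_le; lra).
    eapply Rle_lt_trans; [apply (Hb x0 x Hsol k t Hk)|].
    assert (0 <= s ^ k) by (apply pow_le; lra).
    apply Rle_lt_trans with (C * vnorm n x0 * (eps / D)).
    + replace (C * s ^ k * vnorm n x0) with (C * vnorm n x0 * s ^ k) by ring.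
      apply Rmult_le_compat_l; nra.
    + apply (Rmult_lt_reg_r D); [lra|]. unfold Rdiv.
      replace (C * vnorm n x0 * (eps * / D) * D) with (C * vnorm n x0 * eps) by (field; lra).
      unfold D. nra.
Qed.

Lemma AS_of_right_contractive n A J T : 0 < T -> nonneg_mat n (mmul n (mexpt n A T) J) ->
  right_contractive n (mmul n (mexpt n A T) J) -> AS_constant_dwell n A J T.
Proof.
  intros HT HQ HR tk Htk.
  destruct (right_contractive_geometric n _ HQ HR) as [s [c [Hs [Hc Hg]]]].
  set (G := 1 + INR n * INR n * exp (mnorm n A * T) * mnorm n J).
  assert (HG : 0 <= G).
  { pose proof (pos_INR n). pose proof (exp_pos (mnorm n A * T)). pose proof (mnorm_nonneg n J).
    assert (0 <= INR n * INR n * exp (mnorm n A * T) * mnorm n J) by (repeat apply Rmult_le_pos; lra).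
    unfold G; lra. }
  apply (GAS_of_geometric_decay n A J tk T (G * (INR n * INR n * c)) s); auto.
  - pose proof (pos_INR n). apply Rmult_le_pos; [auto | repeat apply Rmult_le_pos; lra].
  - intros x0 x Hsol k t Ht.
    assert (Hsk : 0 <= s ^ k) by (apply pow_le; lra).
    assert (HQk : mnorm n (mpow n (mmul n (mexpt n A T) J) k) <= INR n * INR n * (c * s ^ k)).
    { apply mnorm_le_const; [apply Rmult_le_pos; auto|]. intros i j Hi Hj.
      rewrite Rabs_pos_eq by (apply mpow_nonneg; auto). auto. }
    assert (Hxk : vnorm n (x (tk k)) <= INR n * INR n * (c * s ^ k) * vnorm n x0).
    { rewrite (vnorm_ext n _ (mvec n (mpow n (mmul n (mexpt n A T) J) k) x0))
        by (intros; apply (solution_at_impulse n A J T tk x0 x); auto).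
      eapply Rle_trans; [apply vnorm_mvec|].
      apply Rmult_le_compat_r; [apply vnorm_nonneg | auto]. }
    eapply Rle_trans; [apply (solution_growth_between n A J T tk x0 x HT Htk Hsol k t Ht)|].
    fold G. replace (G * (INR n * INR n * c) * s ^ k * vnorm n x0)
      with (G * (INR n * INR n * (c * s ^ k) * vnorm n x0)) by ring.
    apply Rmult_le_compat_l; auto.
Qed.

(* [- up (- y)] is the largest integer strictly below [y]. *)
Definition impulse_index (T t : R) : nat := Z.to_nat (- up (- (t / T))).

Lemma impulse_index_spec T t k : 0 < T -> INR k * T < t <= INR (S k) * T ->
  impulse_index T t = k.
Proof.
  intros HT Ht. unfold impulse_index.
  assert (Hz : INR k < t / T <= INR k + 1).
  { rewrite S_INR in Ht. split.
    - apply (Rmult_lt_reg_r T); auto. unfold Rdiv. rewrite Rmult_assoc, Rinv_l, Rmult_1_r; lra.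
    - apply (Rmult_le_reg_r T); auto. unfold Rdiv. rewrite Rmult_assoc, Rinv_l, Rmult_1_r; lra. }
  rewrite <- (tech_up (- (t / T)) (- Z.of_nat k)); rewrite ?opp_IZR, <- ?INR_IZR_INZ; try lra.
  rewrite Z.opp_involutive. apply Nat2Z.id.
Qed.

(* The solution started from the [j]-th unit vector with impulses at [k T];
   its value at [k T] is the [j]-th column of [(e^(TA) J)^k]. *)
Section ColumnSolution.
Variables (n : nat) (A J : mat) (T : R) (j : nat).
Hypotheses (HT : 0 < T) (Hj : (j < n)%nat).

Let Q := mmul n (mexpt n A T) J.
Let P (k : nat) : vec := fun i => mpow n Q k i j.
Let F (k : nat) : R -> vec := flow n A (INR k * T) (fun i => mvec n J (P k) i).
Let xs (t : R) : vec := if Rle_dec t 0 then P 0%nat else F (impulse_index T t) t.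
Let tks (k : nat) : R := INR k * T.

Lemma column_solution_piece k t : INR k * T < t <= INR (S k) * T -> xs t = F k t.
Proof.
  intros Ht. unfold xs. destruct (Rle_dec t 0) as [h|h].
  - exfalso. pose proof (pos_INR k). nra.
  - rewrite (impulse_index_spec T t k); auto.
Qed.

Lemma column_solution_at k i : (i < n)%nat -> xs (tks k) i = P k i.
Proof.
  intros Hi. destruct k as [|k].
  - unfold xs, tks. simpl. destruct (Rle_dec (0 * T) 0); [auto | exfalso; lra].
  - unfold tks. rewrite (column_solution_piece k) by (rewrite S_INR; lra).
    unfold F, flow. replace (INR (S k) * T - INR k * T) with T by (rewrite S_INR; ring).
    rewrite <- mvec_mmul. reflexivity.
Qed.
Lemma column_solution_is_solution : is_solution n A J tks (P 0%nat) xs.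
Proof.
  split; [|split; [|split]].
  - intros i Hi. apply column_solution_at; auto.
  - intros k s Hs i Hi. unfold tks in Hs.
    rewrite (column_solution_piece k s) by lra.
    apply (derivable_pt_lim_ext_loc (fun r => F k r i) _ s _ (INR k * T) (INR (S k) * T)); auto.
    + intros r Hr. rewrite (column_solution_piece k r); auto. lra.
    + apply flow_derive; auto.
  - intros k i Hi. unfold tks.
    rewrite (column_solution_piece k (INR (S k) * T)) by (rewrite S_INR; pose proof (pos_INR k); lra).
    apply (limit1_in_continuity_pt _ (fun r => F k r i)); [|apply flow_continuous; auto].
    intros r Hr. rewrite (column_solution_piece k r); auto. lra.
  - intros k i Hi. unfold tks.
    replace (mvec n J (xs (INR k * T)) i) with (F k (INR k * T) i).
    + apply (limit1_in_continuity_pt _ (fun r => F k r i)); [|apply flow_continuous; auto].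
      intros r Hr. rewrite (column_solution_piece k r); auto. lra.
    + unfold F. rewrite flow_start by auto. apply mvec_ext; auto.
      intros l Hl. symmetry. apply (column_solution_at k l Hl).
Qed.

Lemma AS_column_cvg0 : AS_constant_dwell n A J T ->
  forall eps, 0 < eps -> exists K, forall k, (K <= k)%nat -> forall i, (i < n)%nat ->
    Rabs (mpow n Q k i j) < eps.
Proof.
  intros HAS eps Heps.
  assert (Htk : forall k, tks (S k) - tks k = T) by (intros; unfold tks; rewrite S_INR; ring).
  destruct (HAS tks Htk) as [_ Hattr].
  destruct (Hattr _ _ column_solution_is_solution eps Heps) as [T0 HT0].
  destruct (archimed (T0 / T)) as [Hup _].
  exists (Z.to_nat (up (T0 / T))). intros k Hk i Hi.
  assert (Hle : T0 <= tks k).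
  { unfold tks. destruct (Rle_or_lt T0 0) as [h|h]; [pose proof (pos_INR k); nra|].
    assert (0 < T0 / T) by (apply Rdiv_lt_0_compat; lra).
    assert (IZR (up (T0 / T)) <= INR k).
    { rewrite INR_IZR_INZ. apply IZR_le.
      assert (0 <= up (T0 / T))%Z by (apply le_IZR; lra). lia. }
    assert (T0 / T * T < INR k * T) by (apply Rmult_lt_compat_r; lra).
    unfold Rdiv in *. rewrite Rmult_assoc, Rinv_l, Rmult_1_r in *; lra. }
  eapply Rle_lt_trans; [|apply (HT0 (tks k) Hle)].
  change (mpow n Q k i j) with (P k i). rewrite <- (column_solution_at k i Hi).
  apply (rsum_term_le n (fun i => Rabs (xs (tks k) i)) i); auto. intros; apply Rabs_pos.
Qed.

End ColumnSolution.

Lemma AS_pow_cvg0 n A J T : 0 < T -> AS_constant_dwell n A J T ->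
  pow_cvg0 n (mmul n (mexpt n A T) J).
Proof.
  intros HT HAS eps Heps.
  destruct (fin_eventually n (fun j k => forall i, (i < n)%nat ->
              Rabs (mpow n (mmul n (mexpt n A T) J) k i j) < eps)) as [K HK].
  - intros j Hj. apply (AS_column_cvg0 n A J T j HT Hj HAS eps Heps).
  - exists K. intros k i j Hk Hi Hj. apply HK; auto.
Qed.

Lemma AS_constant_dwell_iff n A J T : Metzler n A -> nonneg_mat n J -> 0 < T ->
  AS_constant_dwell n A J T <-> pow_cvg0 n (mmul n J (mexpt n A T)).
Proof.
  intros HA HJ HT.
  assert (HQ : nonneg_mat n (mmul n (mexpt n A T) J))
    by (apply mmul_nonneg; [apply mexpt_Metzler_nonneg; auto; lra | auto]).
  split; intros H.
  - apply pow_cvg0_mmul_comm, AS_pow_cvg0; auto.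
  - apply AS_of_right_contractive; auto.
    apply pow_cvg0_right_contractive, pow_cvg0_mmul_comm; auto.
Qed.

(** * Derivatives on a closed interval *)

Lemma limit1_in_ext f g D l x0 : (forall x, D x -> f x = g x) ->
  limit1_in f D l x0 -> limit1_in g D l x0.
Proof.
  intros He H eps Heps. destruct (H eps Heps) as [d [Hd H2]]. exists d; split; auto.
  intros x [Dx Hx]. rewrite <- He by auto. apply H2; auto.
Qed.

Lemma derivable_pt_lim_difference_quotient f tau l (D : R -> Prop) :
  (forall s, D s -> s <> tau) -> derivable_pt_lim f tau l ->
  limit1_in (fun s => (f s - f tau) / (s - tau)) D l tau.
Proof.
  intros HD H eps Heps. destruct (H eps Heps) as [d Hd]. exists d; split; [apply cond_pos|].
  intros s [Ds Hs]. simpl in *. unfold R_dist in *. specialize (HD s Ds).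
  specialize (Hd (s - tau) ltac:(lra) Hs). replace (tau + (s - tau)) with s in Hd by ring. auto.
Qed.

Lemma derivable_pt_lim_deriv_on a b f f' :
  (forall tau, a <= tau <= b -> derivable_pt_lim f tau (f' tau)) -> deriv_on a b f f'.
Proof. intros H tau Ht. apply derivable_pt_lim_difference_quotient; [intros s [_ Hs]|]; auto. Qed.

Lemma deriv_on_derivable_pt_lim a b f f' tau : deriv_on a b f f' -> a < tau < b ->
  derivable_pt_lim f tau (f' tau).
Proof.
  intros H Ht eps Heps. destruct (H tau ltac:(lra) eps Heps) as [d [Hd H2]].
  assert (Hd' : 0 < Rmin d (Rmin (tau - a) (b - tau))) by (repeat apply Rmin_pos; lra).
  exists (mkposreal _ Hd'). intros h Hh0 Hh. simpl in Hh.
  pose proof (Rmin_l d (Rmin (tau - a) (b - tau))). pose proof (Rmin_r d (Rmin (tau - a) (b - tau))).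
  pose proof (Rmin_l (tau - a) (b - tau)). pose proof (Rmin_r (tau - a) (b - tau)).
  apply Rabs_def2 in Hh as Hh2.
  specialize (H2 (tau + h)). simpl in H2. unfold R_dist in H2.
  replace (tau + h - tau) with h in H2 by ring. apply H2.
  split; [split; [lra | intros E; apply Hh0; lra]|]. replace (tau + h - tau) with h by ring. lra.
Qed.

Lemma deriv_on_continuous a b f f' tau : deriv_on a b f f' -> a <= tau <= b ->
  forall eps, 0 < eps -> exists del, 0 < del /\
    forall s, a <= s <= b -> Rabs (s - tau) < del -> Rabs (f s - f tau) < eps.
Proof.
  intros H Ht eps Heps. destruct (H tau Ht 1 ltac:(lra)) as [d [Hd H2]].
  set (L := Rabs (f' tau) + 1). assert (HL : 0 < L) by (unfold L; pose proof (Rabs_pos (f' tau)); lra).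
  exists (Rmin d (eps / L)). split; [apply Rmin_pos; [auto | apply Rdiv_lt_0_compat; auto]|].
  intros s Hs Hst. pose proof (Rmin_l d (eps / L)). pose proof (Rmin_r d (eps / L)).
  destruct (Req_dec s tau) as [->|ne]; [rewrite Rminus_eq_0, Rabs_R0; auto|].
  assert (Hsd : R_dist s tau < d) by (unfold R_dist; lra).
  specialize (H2 s (conj (conj Hs ne) Hsd)). simpl in H2. unfold R_dist in H2.
  assert (Rabs ((f s - f tau) / (s - tau)) < L).
  { unfold L. eapply Rle_lt_trans; [|apply Rplus_lt_compat_l, H2].
    replace ((f s - f tau) / (s - tau)) with (f' tau + ((f s - f tau) / (s - tau) - f' tau)) at 1 by ring.
    apply Rabs_triang. }
  replace (f s - f tau) with ((f s - f tau) / (s - tau) * (s - tau)) by (field; lra).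
  rewrite Rabs_mult. assert (0 < Rabs (s - tau)) by (apply Rabs_pos_lt; lra).
  apply Rle_lt_trans with (L * Rabs (s - tau)); [apply Rmult_le_compat_r; lra|].
  apply Rlt_le_trans with (L * (eps / L)); [apply Rmult_lt_compat_l; lra | right; field; lra].
Qed.

Definition clamp (a b t : R) : R := Rmin b (Rmax a t).

Lemma clamp_in a b t : a <= b -> a <= clamp a b t <= b.
Proof. intros. unfold clamp, Rmin, Rmax. destruct (Rle_dec a t); destruct (Rle_dec b _); lra. Qed.

Lemma clamp_id a b t : a <= t <= b -> clamp a b t = t.
Proof. intros. unfold clamp, Rmin, Rmax. destruct (Rle_dec a t); destruct (Rle_dec b _); lra. Qed.

Lemma clamp_dist a b t tau : a <= tau <= b -> Rabs (clamp a b t - tau) <= Rabs (t - tau).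
Proof.
  intros. unfold clamp, Rmin, Rmax.
  destruct (Rle_dec a t); destruct (Rle_dec b _); unfold Rabs; repeat destruct Rcase_abs; lra.
Qed.

(* The mean value theorem needs two-sided continuity at [a] and [b], so it is
   applied to the extension of [f] that is constant outside [[a, b]]. *)
Lemma deriv_on_nondecreasing a b f f' : a < b -> deriv_on a b f f' ->
  (forall tau, a <= tau <= b -> 0 <= f' tau) -> f a <= f b.
Proof.
  intros Hab H Hp. set (fc := fun t => f (clamp a b t)).
  destruct (MVT_gen fc a b f') as [c [Hc E]]; rewrite ?Rmin_left, ?Rmax_right in * by lra.
  - intros t Ht. apply is_derive_Reals.
    apply (derivable_pt_lim_ext_loc f fc t _ a b); auto.
    + intros r Hr. unfold fc. rewrite clamp_id; auto; lra.
    + apply (deriv_on_derivable_pt_lim a b); auto.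
  - intros t Ht eps Heps. destruct (deriv_on_continuous a b f f' t H Ht eps Heps) as [d [Hd H2]].
    exists d. split; auto. intros s [_ Hs]. simpl in *. unfold R_dist in *. unfold fc.
    rewrite (clamp_id a b t) by lra. apply H2; [apply clamp_in; lra|].
    eapply Rle_lt_trans; [apply clamp_dist; lra | auto].
  - unfold fc in E. rewrite !clamp_id in E by lra. specialize (Hp c Hc). nra.
Qed.

Lemma deriv_on_mult_derivable a b f f' h h' : deriv_on a b f f' ->
  (forall tau, derivable_pt_lim h tau (h' tau)) ->
  deriv_on a b (fun t => f t * h t) (fun t => f' t * h t + f t * h' t).
Proof.
  intros Hf Hh tau Ht.
  apply (limit1_in_ext (fun s => (f s - f tau) / (s - tau) * h s + f tau * ((h s - h tau) / (s - tau)))).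
  - intros s [_ Hs]. field. lra.
  - apply limit_plus; [apply limit_mul; [apply Hf; auto|]|].
    + apply (limit1_in_continuity_pt _ h); auto. eapply derivable_pt_lim_continuity_pt; apply Hh.
    + apply (limit_mul (fun _ => f tau)); [apply (limit_free (fun _ => f tau) _ tau)|].
      apply derivable_pt_lim_difference_quotient; [intros s [_ Hs]; auto | apply Hh].
Qed.

Lemma deriv_on_rsum a b n (f f' : nat -> R -> R) :
  (forall i, (i < n)%nat -> deriv_on a b (f i) (f' i)) ->
  deriv_on a b (fun t => rsum n (fun i => f i t)) (fun t => rsum n (fun i => f' i t)).
Proof.
  induction n; intros H tau Ht; simpl.
  - apply (limit1_in_ext (fun _ => 0)); [intros s [_ Hs]; field; lra|].
    apply (limit_free (fun _ => 0) _ tau).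
  - apply (limit1_in_ext (fun s => (rsum n (fun i => f i s) - rsum n (fun i => f i tau)) / (s - tau)
                                 + (f n s - f n tau) / (s - tau))).
    + intros s [_ Hs]. field. lra.
    + apply limit_plus; [apply IHn | apply H]; auto.
Qed.

Lemma deriv_on_opp a b f f' : deriv_on a b f f' -> deriv_on a b (fun t => - f t) (fun t => - f' t).
Proof.
  intros H tau Ht. apply (limit1_in_ext (fun s => - ((f s - f tau) / (s - tau)))).
  - intros s [_ Hs]. field. lra.
  - apply limit_Ropp. apply H; auto.
Qed.

(** * Clock-dependent certificates *)

Definition clock_certificate_end (n : nat) (A J : mat) (T : R) : Prop :=
  exists (zeta dzeta : R -> vec) (eps : R),
    (forall i, (i < n)%nat -> deriv_on 0 T (fun s => zeta s i) (fun s => dzeta s i)) /\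
    pos_vec n (zeta T) /\ 0 < eps /\
    (forall tau, 0 <= tau <= T -> forall j, (j < n)%nat -> vmat n (zeta tau) A j - dzeta tau j <= 0) /\
    (forall j, (j < n)%nat -> vmat n (zeta T) J j - zeta 0 j + eps <= 0).

Definition clock_certificate_start (n : nat) (A J : mat) (T : R) : Prop :=
  exists (xi dxi : R -> vec) (eps : R),
    (forall i, (i < n)%nat -> deriv_on 0 T (fun s => xi s i) (fun s => dxi s i)) /\
    pos_vec n (xi 0) /\ 0 < eps /\
    (forall tau, 0 <= tau <= T -> forall j, (j < n)%nat -> vmat n (xi tau) A j + dxi tau j <= 0) /\
    (forall j, (j < n)%nat -> vmat n (xi 0) J j - xi T j + eps <= 0).

Lemma left_contractive_mmul n J E (lam mu : vec) eps :
  nonneg_mat n E -> (forall j, (j < n)%nat -> 0 < E j j) -> pos_vec n lam -> 0 < eps ->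
  (forall j, (j < n)%nat -> vmat n mu E j <= lam j) ->
  (forall m, (m < n)%nat -> vmat n lam J m <= mu m - eps) ->
  left_contractive n (mmul n J E).
Proof.
  intros HE HEd Hl He Hmu HJ. exists lam. split; auto. intros j Hj.
  rewrite vmat_mmul.
  apply Rle_lt_trans with (vmat n (fun m => mu m - eps) E j).
  - apply rsum_le; intros m Hm. apply Rmult_le_compat_r; auto.
  - unfold vmat. rewrite (rsum_ext n _ (fun m => mu m * E m j - eps * E m j)) by (intros; ring).
    rewrite rsum_sub, rsum_scal_l.
    assert (E j j <= rsum n (fun m => E m j)) by (apply (rsum_term_le n (fun m => E m j)); auto).
    specialize (Hmu j Hj). specialize (HEd j Hj).
    assert (eps * E j j <= eps * rsum n (fun m => E m j)) by (apply Rmult_le_compat_l; lra).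
    assert (0 < eps * E j j) by (apply Rmult_lt_0_compat; auto).
    unfold vmat in Hmu. lra.
Qed.

Section Certificates.
Variables (n : nat) (A J : mat) (T : R).
Hypotheses (hA : Metzler n A) (hT : 0 < T).

Lemma mexpt_nonneg_pos_diag :
  nonneg_mat n (mexpt n A T) /\ (forall j, (j < n)%nat -> 0 < mexpt n A T j j).
Proof.
  split; [apply mexpt_Metzler_nonneg; auto; lra|].
  intros j Hj. apply mexpt_Metzler; auto; lra.
Qed.

(* [tau |-> zeta(tau)^T e^((T - tau) A)] is nondecreasing on [[0, T]]. *)
Lemma clock_certificate_end_left_contractive :
  clock_certificate_end n A J T -> left_contractive n (mmul n J (mexpt n A T)).
Proof.
  intros [zeta [dzeta [eps [Hd [Hpos [Heps [Hode Hjump]]]]]]].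
  destruct mexpt_nonneg_pos_diag as [HE HEd].
  apply (left_contractive_mmul n J _ (zeta T) (zeta 0) eps); auto.
  2:{ intros m Hm. specialize (Hjump m Hm). lra. }
  intros j Hj.
  set (g := fun t => vmat n (zeta t) (mexpt n A (T - t)) j).
  set (g' := fun t => rsum n (fun i => dzeta t i * mexpt n A (T - t) i j
                                   + zeta t i * (mmul n A (mexpt n A (T - t)) i j * -1))).
  assert (Hg : deriv_on 0 T g g').
  { apply (deriv_on_rsum 0 T n (fun i t => zeta t i * mexpt n A (T - t) i j)). intros i Hi.
    apply (deriv_on_mult_derivable 0 T (fun t => zeta t i) (fun t => dzeta t i)); auto.
    intros tau. apply (mexpt_derive_comp n A (fun r => T - r)); auto. apply derivable_pt_lim_reflect. }
  assert (Hg'p : forall t, 0 <= t <= T -> 0 <= g' t).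
  { intros t Ht.
    replace (g' t) with (rsum n (fun m => (dzeta t m - vmat n (zeta t) A m) * mexpt n A (T - t) m j)).
    - apply rsum_nonneg. intros m Hm. apply Rmult_le_pos.
      + specialize (Hode t Ht m Hm). lra.
      + apply mexpt_Metzler; auto; lra.
    - unfold g'. rewrite rsum_add.
      replace (rsum n (fun i => zeta t i * (mmul n A (mexpt n A (T - t)) i j * -1)))
        with (- vmat n (vmat n (zeta t) A) (mexpt n A (T - t)) j).
      + unfold vmat.
        rewrite (rsum_ext n _ (fun m => dzeta t m * mexpt n A (T - t) m j
                   - rsum n (fun i => zeta t i * A i m) * mexpt n A (T - t) m j)) by (intros; ring).
        rewrite rsum_sub. ring.
      + rewrite <- vmat_mmul. unfold vmat. rewrite <- rsum_opp. apply rsum_ext; intros; ring. }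
  pose proof (deriv_on_nondecreasing 0 T g g' hT Hg Hg'p) as Hm. unfold g in Hm.
  rewrite Rminus_0_r, Rminus_eq_0 in Hm.
  rewrite (vmat_ext n _ idm (zeta T) (zeta T)), vmat_idm in Hm by (auto; intros; apply mexpt_0; auto).
  auto.
Qed.

(* [tau |-> xi(tau)^T e^(tau A)] is nonincreasing on [[0, T]]. *)
Lemma clock_certificate_start_left_contractive :
  clock_certificate_start n A J T -> left_contractive n (mmul n J (mexpt n A T)).
Proof.
  intros [xi [dxi [eps [Hd [Hpos [Heps [Hode Hjump]]]]]]].
  destruct mexpt_nonneg_pos_diag as [HE HEd].
  apply (left_contractive_mmul n J _ (xi 0) (xi T) eps); auto.
  2:{ intros m Hm. specialize (Hjump m Hm). lra. }
  intros j Hj.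
  set (g := fun t => rsum n (fun i => - xi t i * mexpt n A t i j)).
  set (g' := fun t => rsum n (fun i => - dxi t i * mexpt n A t i j
                                   + - xi t i * mmul n A (mexpt n A t) i j)).
  assert (Hg : deriv_on 0 T g g').
  { apply (deriv_on_rsum 0 T n (fun i t => - xi t i * mexpt n A t i j)). intros i Hi.
    apply (deriv_on_mult_derivable 0 T (fun t => - xi t i) (fun t => - dxi t i));
      [apply (deriv_on_opp 0 T (fun t => xi t i)); auto|].
    intros tau. apply mexpt_derive; auto. }
  assert (Hg'p : forall t, 0 <= t <= T -> 0 <= g' t).
  { intros t Ht.
    replace (g' t) with (rsum n (fun m => - (dxi t m + vmat n (xi t) A m) * mexpt n A t m j)).
    - apply rsum_nonneg. intros m Hm. apply Rmult_le_pos.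
      + specialize (Hode t Ht m Hm). lra.
      + apply mexpt_Metzler; auto; lra.
    - unfold g'. rewrite rsum_add.
      replace (rsum n (fun i => - xi t i * mmul n A (mexpt n A t) i j))
        with (- vmat n (vmat n (xi t) A) (mexpt n A t) j).
      + unfold vmat.
        rewrite (rsum_ext n _ (fun m => - dxi t m * mexpt n A t m j
                   - rsum n (fun i => xi t i * A i m) * mexpt n A t m j)) by (intros; ring).
        rewrite rsum_sub. ring.
      + rewrite <- vmat_mmul. unfold vmat. rewrite <- rsum_opp. apply rsum_ext; intros; ring. }
  pose proof (deriv_on_nondecreasing 0 T g g' hT Hg Hg'p) as Hm. unfold g in Hm.
  rewrite (rsum_ext n (fun i => - xi 0 i * mexpt n A 0 i j) (fun i => - xi 0 i * idm i j)) in Hm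
    by (intros; rewrite mexpt_0; auto).
  rewrite (rsum_delta_r n (fun i => - xi 0 i)) in Hm by auto.
  assert (Hneg : rsum n (fun i => - xi T i * mexpt n A T i j) = - vmat n (xi T) (mexpt n A T) j).
  { unfold vmat. rewrite <- rsum_opp. apply rsum_ext; intros; ring. }
  lra.
Qed.
End Certificates.

Lemma left_contractive_gap n M : left_contractive n M -> exists v eps, pos_vec n v /\ 0 < eps /\
  forall j, (j < n)%nat -> vmat n v M j - v j + eps <= 0.
Proof.
  intros [v [Hv H]]. destruct (fin_pos_lower_bound n (fun j => v j - vmat n v M j)) as [e [He H2]].
  - intros j Hj. specialize (H j Hj). lra.
  - exists v, e. split; [|split]; auto. intros j Hj. specialize (H2 j Hj). lra.
Qed.

Section CertificatesConverse.
Variables (n : nat) (A J : mat) (T : R).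
Hypotheses (hA : Metzler n A) (hT : 0 < T).

Lemma vmat_mexpt_pos (v : vec) s : pos_vec n v -> 0 <= s -> pos_vec n (vmat n v (mexpt n A s)).
Proof.
  intros Hv Hs i Hi. apply Rlt_le_trans with (v i * mexpt n A s i i).
  - apply Rmult_lt_0_compat; [auto | apply mexpt_Metzler; auto].
  - apply (rsum_term_le n (fun l => v l * mexpt n A s l i) i); auto.
    intros l Hl. apply Rmult_le_pos; [apply Rlt_le; auto | apply mexpt_Metzler; auto].
Qed.

Lemma left_contractive_clock_certificate_end :
  left_contractive n (mmul n (mexpt n A T) J) -> clock_certificate_end n A J T.
Proof.
  intros HL. destruct (left_contractive_gap n _ HL) as [v [eps [Hv [He Hg]]]].
  exists (fun s => vmat n v (mexpt n A s)), (fun s => vmat n v (mmul n (mexpt n A s) A)), eps.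
  split; [|split; [|split; [|split]]]; auto.
  - intros i Hi. apply derivable_pt_lim_deriv_on. intros tau _.
    apply (derivable_pt_lim_rsum n (fun l s => v l * mexpt n A s l i)). intros l Hl.
    apply (derivable_pt_lim_scal (fun s => mexpt n A s l i)), mexpt_derive_r; auto.
  - apply vmat_mexpt_pos; auto; lra.
  - intros tau Ht j Hj. rewrite vmat_mmul. lra.
  - intros j Hj. specialize (Hg j Hj).
    rewrite (vmat_ext n (mexpt n A 0) idm v v), vmat_idm by (auto; intros; apply mexpt_0; auto).
    rewrite <- vmat_mmul. auto.
Qed.

Lemma left_contractive_clock_certificate_start :
  left_contractive n (mmul n (mexpt n A T) J) -> clock_certificate_start n A J T.
Proof.
  intros HL. destruct (left_contractive_gap n _ HL) as [v [eps [Hv [He Hg]]]].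
  exists (fun s => vmat n v (mexpt n A (T - s))),
         (fun s i => - vmat n v (mmul n (mexpt n A (T - s)) A) i), eps.
  split; [|split; [|split; [|split]]]; auto.
  - intros i Hi. apply derivable_pt_lim_deriv_on. intros tau _.
    replace (- vmat n v (mmul n (mexpt n A (T - tau)) A) i)
      with (rsum n (fun l => v l * (mmul n (mexpt n A (T - tau)) A l i * -1)))
      by (unfold vmat; rewrite <- rsum_opp; apply rsum_ext; intros; ring).
    apply (derivable_pt_lim_rsum n (fun l s => v l * mexpt n A (T - s) l i)). intros l Hl.
    apply (derivable_pt_lim_scal (fun s => mexpt n A (T - s) l i)).
    apply (mexpt_derive_comp_r n A (fun r => T - r)); auto. apply derivable_pt_lim_reflect.
  - rewrite Rminus_0_r. apply vmat_mexpt_pos; auto; lra.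
  - intros tau Ht j Hj. rewrite vmat_mmul. lra.
  - intros j Hj. specialize (Hg j Hj). rewrite Rminus_0_r, Rminus_eq_0.
    rewrite (vmat_ext n (mexpt n A 0) idm v v), vmat_idm by (auto; intros; apply mexpt_0; auto).
    rewrite <- vmat_mmul. auto.
Qed.

End CertificatesConverse.

(** * Reformulations of contractivity *)

Lemma left_contractive_iff_sub_idm n M :
  (exists lam : vec, pos_vec n lam /\ neg_vec n (vmat n lam (msub M idm))) <-> left_contractive n M.
Proof.
  assert (E : forall lam j, (j < n)%nat -> vmat n lam (msub M idm) j = vmat n lam M j - lam j).
  { intros lam j Hj. unfold vmat, msub.
    rewrite (rsum_ext n _ (fun i => lam i * M i j - lam i * idm i j)) by (intros; ring).
    rewrite rsum_sub, rsum_delta_r; auto. }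
  split; intros [lam [Hl H]]; exists lam; split; auto; intros j Hj; specialize (H j Hj);
    rewrite E in *; auto; lra.
Qed.

Lemma right_contractive_iff_sub_idm n M :
  (exists lam : vec, pos_vec n lam /\ neg_vec n (mvec n (msub M idm) lam)) <-> right_contractive n M.
Proof.
  assert (E : forall lam i, (i < n)%nat -> mvec n (msub M idm) lam i = mvec n M lam i - lam i).
  { intros lam i Hi. unfold mvec, msub.
    rewrite (rsum_ext n _ (fun j => M i j * lam j - idm i j * lam j)) by (intros; ring).
    rewrite rsum_sub, rsum_delta_l; auto. }
  split; intros [lam [Hl H]]; exists lam; split; auto; intros j Hj; specialize (H j Hj);
    rewrite E in *; auto; lra.
Qed.

Lemma dot_mvec n lam M x : dot n lam (mvec n M x) = dot n (vmat n lam M) x.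
Proof.
  unfold dot, mvec, vmat.
  transitivity (rsum n (fun i => rsum n (fun j => lam i * M i j * x j))).
  - apply rsum_ext; intros. rewrite <- rsum_scal_l. apply rsum_ext; intros; ring.
  - rewrite rsum_swap. apply rsum_ext; intros. rewrite <- rsum_scal_r; auto.
Qed.

(* Testing the decrease condition on unit vectors recovers [lam^T M < lam^T]. *)
Lemma linear_Lyapunov_decrease_iff n M :
  (exists lam mu : vec, pos_vec n lam /\ pos_vec n mu /\
     forall x : vec, nonneg_vec n x -> dot n lam (mvec n M x) - dot n lam x <= - dot n mu x)
  <-> left_contractive n M.
Proof.
  split.
  - intros [lam [mu [Hl [Hm H]]]]. exists lam. split; auto. intros j Hj.
    set (e := fun k : nat => idm k j).
    assert (He : nonneg_vec n e) by (intros k _; unfold e, idm; destruct (Nat.eq_dec k j); lra).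
    specialize (H e He). rewrite dot_mvec in H. unfold dot, e in H.
    rewrite !rsum_delta_r in H by auto. specialize (Hm j Hj). lra.
  - intros [lam [Hl H]]. exists lam, (fun j => lam j - vmat n lam M j).
    split; [|split]; auto; [intros j Hj; specialize (H j Hj); lra|].
    intros x Hx. rewrite dot_mvec. unfold dot. rewrite <- rsum_sub, <- rsum_opp.
    apply rsum_le; intros; apply Req_le; ring.
Qed.

Lemma pow_cvg0_tfae n N : nonneg_mat n N ->
  (pow_cvg0 n N <-> left_contractive n N) /\ (pow_cvg0 n N <-> right_contractive n N) /\
  (pow_cvg0 n N <-> Schur_stable n N) /\ (pow_cvg0 n N <-> Schur_stable n (mtr N)).
Proof.
  intros HN. pose proof (nonneg_mat_tr n N HN) as HtN.
  split; [|split; [|split]]; split; intros H.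
  - apply pow_cvg0_left_contractive; auto.
  - apply left_contractive_pow_cvg0; auto.
  - apply pow_cvg0_right_contractive; auto.
  - apply right_contractive_pow_cvg0; auto.
  - apply left_contractive_Schur_stable, pow_cvg0_left_contractive; auto.
  - apply right_contractive_pow_cvg0, Schur_stable_right_contractive; auto.
  - apply left_contractive_Schur_stable; auto.
    apply left_contractive_tr, pow_cvg0_right_contractive; auto.
  - apply left_contractive_pow_cvg0, left_contractive_tr, Schur_stable_right_contractive; auto.
Qed.

Lemma mexpt_tr_mmul_meq n A J T :
  meq n (mtr (mmul n J (mexpt n A T))) (mmul n (mexpt n (mtr A) T) (mtr J)).
Proof.
  intros i j Hi Hj. unfold mtr at 1, mmul. apply rsum_ext. intros k Hk.
  rewrite mexpt_tr by auto. unfold mtr. ring.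
Qed.

Theorem theorem2 (n : nat) (A J : mat) (Tbar : R)
  (hA : Metzler n A) (hJ : nonneg_mat n J) (hT : 0 < Tbar) :
  let M := mmul n J (mexp n (mscale Tbar A)) in
  let Pa := AS_constant_dwell n A J Tbar in
  let Pb := exists lam mu : vec, pos_vec n lam /\ pos_vec n mu /\
      forall x : vec, nonneg_vec n x ->
        dot n lam (mvec n M x) - dot n lam x <= - dot n mu x in
  let Pc := exists lam : vec, pos_vec n lam /\
      neg_vec n (vmat n lam (msub M idm)) in
  let Pc' := Schur_stable n M in
  let Pd := exists lam : vec, pos_vec n lam /\
      neg_vec n (mvec n (msub M idm) lam) in
  let Pd' := Schur_stable n (mmul n (mexp n (mscale Tbar (mtr A))) (mtr J)) in
  let Pe := exists (zeta dzeta : R -> vec) (eps : R),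
      (forall i, (i < n)%nat ->
         deriv_on 0 Tbar (fun s => zeta s i) (fun s => dzeta s i)) /\
      pos_vec n (zeta Tbar) /\ 0 < eps /\
      (forall tau, 0 <= tau <= Tbar -> forall j, (j < n)%nat ->
         vmat n (zeta tau) A j - dzeta tau j <= 0) /\
      (forall j, (j < n)%nat -> vmat n (zeta Tbar) J j - zeta 0 j + eps <= 0) in
  let Pf := exists (xi dxi : R -> vec) (eps : R),
      (forall i, (i < n)%nat ->
         deriv_on 0 Tbar (fun s => xi s i) (fun s => dxi s i)) /\
      pos_vec n (xi 0) /\ 0 < eps /\
      (forall tau, 0 <= tau <= Tbar -> forall j, (j < n)%nat ->
         vmat n (xi tau) A j + dxi tau j <= 0) /\
      (forall j, (j < n)%nat -> vmat n (xi 0) J j - xi Tbar j + eps <= 0) in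
  (Pa <-> Pb) /\ (Pa <-> Pc) /\ (Pa <-> Pc') /\ (Pa <-> Pd) /\
  (Pa <-> Pd') /\ (Pa <-> Pe) /\ (Pa <-> Pf).
Proof.
  intros M Pa Pb Pc Pc' Pd Pd' Pe Pf.
  set (Q := mmul n (mexpt n A Tbar) J).
  assert (HE : nonneg_mat n (mexpt n A Tbar)) by (apply mexpt_Metzler_nonneg; auto; lra).
  assert (HM : nonneg_mat n M) by (apply mmul_nonneg; auto).
  assert (HQ : nonneg_mat n Q) by (apply mmul_nonneg; auto).
  destruct (pow_cvg0_tfae n M HM) as [eL [eR [eS eS']]].
  assert (eA : Pa <-> pow_cvg0 n M) by (apply AS_constant_dwell_iff; auto).
  assert (eQ : left_contractive n Q <-> pow_cvg0 n M).
  { split; intros H.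
    - apply pow_cvg0_mmul_comm, left_contractive_pow_cvg0; auto.
    - apply pow_cvg0_left_contractive, pow_cvg0_mmul_comm; auto. }
  assert (eD' : Pd' <-> Schur_stable n (mtr M)).
  { split; apply Schur_stable_meq; intros i j Hi Hj; [symmetry|];
      apply (mexpt_tr_mmul_meq n A J Tbar); auto. }
  assert (eE : Pe <-> pow_cvg0 n M).
  { split; intros H.
    - apply eL, (clock_certificate_end_left_contractive n A J Tbar); auto.
    - apply (left_contractive_clock_certificate_end n A J Tbar); auto. apply eQ; auto. }
  assert (eF : Pf <-> pow_cvg0 n M).
  { split; intros H.
    - apply eL, (clock_certificate_start_left_contractive n A J Tbar); auto.
    - apply (left_contractive_clock_certificate_start n A J Tbar); auto. apply eQ; auto. }
  unfold Pb, Pc, Pd, Pc'.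
  rewrite linear_Lyapunov_decrease_iff, left_contractive_iff_sub_idm, right_contractive_iff_sub_idm.
  rewrite eA, eD', eE, eF, <- eL, <- eR, <- eS, <- eS'. tauto.
Qed.
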